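(* Let $\lambda$ be real analytic on $[0,T]$ with $\|\lambda\|_{C^{1/2}}\le1$, and suppose $\lambda$ extends complex-analytically to $E=\{z\in\mathbb{C}:\operatorname{dist}(z,[0,T])\le\delta\}$ for some $\delta>0$; let $M$ bound $|\lambda'|$ and $|\lambda''|$ on $E$. Then there exists $\delta_1\in(0,\delta)$, depending only on $\delta,M,T$, such that with $E_1=\{t\in\mathbb{C}:0<\operatorname{Re}t<T+\delta_1,\ |\operatorname{Im}t|<\delta_1\}$, for every $s\in E_1$ and $\epsilon\in(0,1]$ the initial value problem $$\partial_uf(u,s,\epsilon)=\frac{-2}{f(u,s,\epsilon)}+\lambda'(s-u),\quad u\ge0,\qquad f(0,s,\epsilon)=i\epsilon$$ has a unique solution for $u\in[0,\operatorname{Re}s+\delta_1]$, and $$\max\Big(\sqrt{2u},\frac\epsilon2\Big)\le\operatorname{Im}f(u,s,\epsilon)\quad\text{for }0\le u\le\operatorname{Re}s+\delta_1.$$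
   Context: $\|\lambda\|_{C^{1/2}}=\sup_{s\ne t\in[0,T]}|\lambda(t)-\lambda(s)|/|t-s|^{1/2}$. Here $u$ is a real variable and $s$ a complex parameter; $\lambda'$ denotes the complex derivative of the analytic extension. *)

From Stdlib Require Import Reals Lra.
Open Scope R_scope.

Definition Cpx : Type := (R * R)%type.
Definition Re (z : Cpx) : R := fst z.
Definition Im (z : Cpx) : R := snd z.
Definition RtoC (x : R) : Cpx := (x, 0).
Definition Ci : Cpx := (0, 1).
Definition Cadd (z w : Cpx) : Cpx := (Re z + Re w, Im z + Im w).
Definition Copp (z : Cpx) : Cpx := (- Re z, - Im z).
Definition Csub (z w : Cpx) : Cpx := Cadd z (Copp w).
Definition Cmul (z w : Cpx) : Cpx :=
  (Re z * Re w - Im z * Im w, Re z * Im w + Im z * Re w).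
Definition Cinv (z : Cpx) : Cpx :=
  (Re z / (Re z ^ 2 + Im z ^ 2), - Im z / (Re z ^ 2 + Im z ^ 2)).
Definition Cdiv (z w : Cpx) : Cpx := Cmul z (Cinv w).
Definition Cmod (z : Cpx) : R := sqrt (Re z ^ 2 + Im z ^ 2).

Definition C_has_deriv (g : Cpx -> Cpx) (z d : Cpx) : Prop :=
  forall eps, 0 < eps -> exists r, 0 < r /\
    forall h : Cpx, Cmod h < r ->
      Cmod (Csub (Csub (g (Cadd z h)) (g z)) (Cmul d h)) <= eps * Cmod h.

Definition C_open (U : Cpx -> Prop) : Prop :=
  forall z, U z -> exists r, 0 < r /\ forall w, Cmod (Csub w z) < r -> U w.

(** E = { z : dist(z,[0,T]) <= delta } (the distance to the compact interval is attained). *)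
Definition Eset (T delta : R) (z : Cpx) : Prop :=
  exists x, 0 <= x <= T /\ Cmod (Csub z (RtoC x)) <= delta.

Definition E1set (T delta1 : R) (t : Cpx) : Prop :=
  0 < Re t < T + delta1 /\ Rabs (Im t) < delta1.

Definition has_deriv_within (f : R -> Cpx) (a b u : R) (v : Cpx) : Prop :=
  forall eps, 0 < eps -> exists r, 0 < r /\
    forall h, a <= u + h <= b -> Rabs h < r ->
      Cmod (Csub (Csub (f (u + h)) (f u)) (Cmul (RtoC h) v)) <= eps * Rabs h.

Definition is_ivp_solution (dlam : Cpx -> Cpx) (s : Cpx) (eps b : R) (f : R -> Cpx) : Prop :=
  f 0 = Cmul (RtoC eps) Ci /\
  forall u, 0 <= u <= b ->
    f u <> RtoC 0 /\
    has_deriv_within f 0 b u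
      (Cadd (Cdiv (RtoC (-2)) (f u)) (dlam (Csub s (RtoC u)))).

From Stdlib Require Import Reals Lra Psatz FunctionalExtensionality.
From Stdlib Require Classical_Prop.
From Coquelicot Require Import Rcomplements Hierarchy Derive RInt RInt_analysis Lim_seq Rbar.
From Coquelicot Require Complex.
Open Scope R_scope.

(* Write [f = x + i y].  Since [lam] is real on [[0, T]], [Im lam'] is [O(delta1)]
   near the segment, and the [C^{1/2}] bound gives [|ell u| <= (21/20) sqrt u] for
   [ell u = Re lam (s - u) - Re lam s].  Along a solution, [y^2 - (x + ell)^2] has
   derivative [4 + 4 ell x / |f|^2 + 2 y Im lam' (s - u)], which is at least [12/5]
   as long as [y^2 >= 2 u]; by continuity [y^2 >= eps^2 + (12/5) u] on the whole
   interval.  Existence follows by Picard iteration for the field with [Im f]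
   clipped below at [eps / 2], which is globally Lipschitz; the bound shows that
   the clipping is never active.  Uniqueness is a Gronwall argument, [-2 / f]
   being Lipschitz away from [0]. *)

Lemma Cmod_ge0 z : 0 <= Cmod z.
Proof. exact (Complex.Cmod_ge_0 z). Qed.

Lemma Cmod_triangle z w : Cmod (Cadd z w) <= Cmod z + Cmod w.
Proof. exact (Complex.Cmod_triangle z w). Qed.

Lemma Rabs_Re_le_Cmod z : Rabs (Re z) <= Cmod z.
Proof. exact (Complex.re_le_Cmod z). Qed.

Lemma Rabs_Im_le_Cmod z : Rabs (Im z) <= Cmod z.
Proof. eapply Rle_trans; [apply Rmax_r | exact (Complex.Rmax_Cmod z)]. Qed.

Lemma Cmod_sqr z : Cmod z ^ 2 = Re z ^ 2 + Im z ^ 2.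
Proof. unfold Cmod. rewrite pow2_sqrt; [reflexivity | nra]. Qed.

Lemma Cmod_le_Rabs_Re_Im z : Cmod z <= Rabs (Re z) + Rabs (Im z).
Proof.
  pose proof (Rabs_pos (Re z)); pose proof (Rabs_pos (Im z)).
  unfold Cmod. rewrite <- (sqrt_pow2 (Rabs (Re z) + Rabs (Im z))) by lra.
  apply sqrt_le_1_alt. rewrite <- (pow2_abs (Re z)), <- (pow2_abs (Im z)). nra.
Qed.

Lemma Cmod_le_of_sqr z c : 0 <= c -> Re z ^ 2 + Im z ^ 2 <= c ^ 2 -> Cmod z <= c.
Proof. intros Hc Hz. unfold Cmod. rewrite <- (sqrt_pow2 c Hc). exact (sqrt_le_1_alt _ _ Hz). Qed.

Lemma Cmod_Cmul z w : Cmod (Cmul z w) = Cmod z * Cmod w.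
Proof. exact (Complex.Cmod_mult z w). Qed.

Lemma Cmod_RtoC x : Cmod (RtoC x) = Rabs x.
Proof. exact (Complex.Cmod_R x). Qed.

Lemma Csub_pair z w : Csub z w = (Re z - Re w, Im z - Im w).
Proof. reflexivity. Qed.

Lemma Cmul_RtoC_pair h v : Cmul (RtoC h) v = (h * Re v, h * Im v).
Proof. unfold Cmul, RtoC, Re, Im; simpl. f_equal; ring. Qed.

Lemma Csub_Cadd_l w x y : Csub (Cadd w x) (Cadd w y) = Csub x y.
Proof. unfold Csub, Cadd, Copp, Re, Im; simpl. f_equal; ring. Qed.

Lemma Cmod_Csub_triangle x y z : Cmod (Csub x z) <= Cmod (Csub x y) + Cmod (Csub y z).
Proof.
  eapply Rle_trans; [|apply Cmod_triangle]. right. f_equal.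
  unfold Csub, Cadd, Copp, Re, Im; simpl. f_equal; ring.
Qed.

Lemma Cmod_Csub_sym z w : Cmod (Csub z w) = Cmod (Csub w z).
Proof. unfold Cmod, Csub, Cadd, Copp, Re, Im; simpl. f_equal. ring. Qed.

Lemma Cmod_Csub_ge z w : Cmod z - Cmod (Csub z w) <= Cmod w.
Proof.
  assert (Cmod z <= Cmod w + Cmod (Csub z w)); [|lra].
  eapply Rle_trans; [|apply Cmod_triangle]. right. f_equal.
  destruct z; unfold Csub, Cadd, Copp, Re, Im; simpl. f_equal; ring.
Qed.

Lemma Cmod_Csub_eq0 z w : Cmod (Csub z w) = 0 -> z = w.
Proof.
  intros H. apply Complex.Cmod_eq_0 in H. destruct z, w.
  unfold Csub, Cadd, Copp, Re, Im in H; simpl in H. injection H. intros. f_equal; lra.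
Qed.

Lemma continuity_pt_ball (f : R -> R) x0 : continuity_pt f x0 <->
  forall eps, 0 < eps -> exists d, 0 < d /\ forall x, Rabs (x - x0) < d -> Rabs (f x - f x0) < eps.
Proof.
  split.
  - intros H eps Heps. destruct (H eps Heps) as [d [Hd H']].
    exists d. split; auto. intros x Hx. destruct (Req_dec x0 x) as [<-|Hne].
    + unfold Rminus. rewrite Rplus_opp_r, Rabs_R0. auto.
    + apply (H' x). split; [split; auto; exact I | exact Hx].
  - intros H eps Heps. destruct (H eps Heps) as [d [Hd H']].
    exists d. split; auto. intros x [_ Hx]. apply H'. exact Hx.
Qed.

Definition Ccontinuous_at (g : R -> Cpx) (t : R) : Prop :=
  forall eps, 0 < eps -> exists d, 0 < d /\
    forall t', Rabs (t' - t) < d -> Cmod (Csub (g t') (g t)) < eps.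

Lemma Ccontinuous_at_Re g t : Ccontinuous_at g t -> continuity_pt (fun u => Re (g u)) t.
Proof.
  intros H. apply continuity_pt_ball. intros eps Heps. destruct (H eps Heps) as [d [Hd H']].
  exists d; split; auto. intros x Hx.
  eapply Rle_lt_trans; [apply (Rabs_Re_le_Cmod (Csub (g x) (g t))) | auto].
Qed.

Lemma Ccontinuous_at_Im g t : Ccontinuous_at g t -> continuity_pt (fun u => Im (g u)) t.
Proof.
  intros H. apply continuity_pt_ball. intros eps Heps. destruct (H eps Heps) as [d [Hd H']].
  exists d; split; auto. intros x Hx.
  eapply Rle_lt_trans; [apply (Rabs_Im_le_Cmod (Csub (g x) (g t))) | auto].
Qed.

Lemma Ccontinuous_at_pair g t :
  continuity_pt (fun u => Re (g u)) t -> continuity_pt (fun u => Im (g u)) t -> Ccontinuous_at g t.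
Proof.
  rewrite !continuity_pt_ball. intros H1 H2 eps Heps.
  destruct (H1 (eps/2)) as [d1 [Hd1 H1']]; [lra|].
  destruct (H2 (eps/2)) as [d2 [Hd2 H2']]; [lra|].
  exists (Rmin d1 d2). split; [apply Rmin_pos; auto|].
  intros x Hx. specialize (H1' x (Rlt_le_trans _ _ _ Hx (Rmin_l _ _))).
  specialize (H2' x (Rlt_le_trans _ _ _ Hx (Rmin_r _ _))).
  eapply Rle_lt_trans; [apply Cmod_le_Rabs_Re_Im|].
  change (Rabs (Re (g x) - Re (g t)) + Rabs (Im (g x) - Im (g t)) < eps). lra.
Qed.

Lemma Ccontinuous_at_const c t : Ccontinuous_at (fun _ => c) t.
Proof.
  intros eps He. exists 1. split; [lra|]. intros _ _.
  replace (Csub c c) with (RtoC 0) by (unfold Csub, Cadd, Copp, RtoC; f_equal; simpl; ring).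
  rewrite Cmod_RtoC, Rabs_R0. exact He.
Qed.

Lemma Ccontinuous_at_add g1 g2 t : Ccontinuous_at g1 t -> Ccontinuous_at g2 t ->
  Ccontinuous_at (fun u => Cadd (g1 u) (g2 u)) t.
Proof.
  intros H1 H2 eps Heps.
  destruct (H1 (eps/2)) as [d1 [Hd1 H1']]; [lra|].
  destruct (H2 (eps/2)) as [d2 [Hd2 H2']]; [lra|].
  exists (Rmin d1 d2). split; [apply Rmin_pos; auto|].
  intros x Hx. specialize (H1' x (Rlt_le_trans _ _ _ Hx (Rmin_l _ _))).
  specialize (H2' x (Rlt_le_trans _ _ _ Hx (Rmin_r _ _))).
  eapply Rle_lt_trans with (Cmod (Csub (g1 x) (g1 t)) + Cmod (Csub (g2 x) (g2 t))); [|lra].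
  eapply Rle_trans; [|apply Cmod_triangle]. right. f_equal.
  unfold Csub, Cadd, Copp, Re, Im; simpl. f_equal; ring.
Qed.

Lemma Ccontinuous_at_lipschitz (Q : Cpx -> Cpx) L g t : 0 < L ->
  (forall z w, Cmod (Csub (Q z) (Q w)) <= L * Cmod (Csub z w)) ->
  Ccontinuous_at g t -> Ccontinuous_at (fun u => Q (g u)) t.
Proof.
  intros HL HQ H eps Heps. destruct (H (eps / L)) as [d [Hd H']].
  { apply Rdiv_lt_0_compat; auto. }
  exists d. split; auto. intros x Hx. eapply Rle_lt_trans; [apply HQ|].
  specialize (H' x Hx). apply Rmult_lt_compat_l with (r := L) in H'; auto.
  replace (L * (eps / L)) with eps in H' by (field; lra). exact H'.
Qed.

Lemma Ccontinuous_at_comp (g : R -> Cpx) (c : R -> R) t :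
  continuity_pt c t -> Ccontinuous_at g (c t) -> Ccontinuous_at (fun u => g (c u)) t.
Proof.
  intros Hc H eps Heps. destruct (H eps Heps) as [d [Hd H']].
  destruct (proj1 (continuity_pt_ball c t) Hc d Hd) as [d' [Hd' H'']].
  exists d'. split; auto.
Qed.

Lemma has_deriv_within_pair (f : R -> Cpx) a b u v1 v2 :
  derivable_pt_lim (fun t => Re (f t)) u v1 ->
  derivable_pt_lim (fun t => Im (f t)) u v2 ->
  has_deriv_within f a b u (v1, v2).
Proof.
  intros H1 H2 eps Heps.
  destruct (H1 (eps/2)) as [d1 Hd1]; [lra|].
  destruct (H2 (eps/2)) as [d2 Hd2]; [lra|].
  exists (Rmin d1 d2). split; [apply Rmin_pos; apply cond_pos|].
  intros h _ Hh. destruct (Req_dec h 0) as [->|Hh0].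
  { rewrite Rplus_0_r, Rabs_R0, Rmult_0_r.
    replace (Csub (Csub (f u) (f u)) (Cmul (RtoC 0) (v1, v2))) with (RtoC 0)
      by (unfold Csub, Cadd, Copp, Cmul, RtoC, Re, Im; simpl; f_equal; ring).
    rewrite Cmod_RtoC, Rabs_R0. lra. }
  specialize (Hd1 h Hh0 (Rlt_le_trans _ _ _ Hh (Rmin_l _ _))).
  specialize (Hd2 h Hh0 (Rlt_le_trans _ _ _ Hh (Rmin_r _ _))).
  eapply Rle_trans; [apply Cmod_le_Rabs_Re_Im|].
  rewrite !Csub_pair, Cmul_RtoC_pair. simpl.
  assert (Hp : 0 < Rabs h) by (apply Rabs_pos_lt; auto).
  replace (Re (f (u + h)) - Re (f u) - h * v1)
    with (h * ((Re (f (u + h)) - Re (f u)) / h - v1)) by (field; auto).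
  replace (Im (f (u + h)) - Im (f u) - h * v2)
    with (h * ((Im (f (u + h)) - Im (f u)) / h - v2)) by (field; auto).
  rewrite !Rabs_mult. nra.
Qed.

Lemma has_deriv_within_Re_Im (f : R -> Cpx) a b u v :
  a < u < b -> has_deriv_within f a b u v ->
  derivable_pt_lim (fun t => Re (f t)) u (Re v) /\
  derivable_pt_lim (fun t => Im (f t)) u (Im v).
Proof.
  intros Hu H.
  assert (Hpart : forall p : Cpx -> R, (forall z, Rabs (p z) <= Cmod z) ->
            (forall z w, p (Csub z w) = p z - p w) -> (forall h, p (Cmul (RtoC h) v) = h * p v) ->
            derivable_pt_lim (fun t => p (f t)) u (p v)).
  { intros p Hp Hsub Hmul eps Heps.
    destruct (H (eps/2)) as [r [Hr Hr']]; [lra|].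
    assert (Hm : 0 < Rmin r (Rmin (u - a) (b - u))) by (repeat apply Rmin_pos; lra).
    exists (mkposreal _ Hm). intros h Hh0 Hh. simpl in Hh.
    pose proof (Rmin_l r (Rmin (u - a) (b - u))); pose proof (Rmin_r r (Rmin (u - a) (b - u))).
    pose proof (Rmin_l (u - a) (b - u)); pose proof (Rmin_r (u - a) (b - u)).
    assert (Hab : a <= u + h <= b) by (apply Rabs_lt_between in Hh; lra).
    specialize (Hr' h Hab ltac:(lra)).
    pose proof (Hp (Csub (Csub (f (u + h)) (f u)) (Cmul (RtoC h) v))) as Hph.
    rewrite !Hsub, Hmul in Hph.
    assert (Hpos : 0 < Rabs h) by (apply Rabs_pos_lt; auto).
    replace (p (f (u + h)) - p (f u) - h * p v)
      with (h * ((p (f (u + h)) - p (f u)) / h - p v)) in Hph by (field; auto).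
    rewrite Rabs_mult in Hph. nra. }
  split; apply Hpart.
  - apply Rabs_Re_le_Cmod.
  - reflexivity.
  - intros h. rewrite Cmul_RtoC_pair. reflexivity.
  - apply Rabs_Im_le_Cmod.
  - reflexivity.
  - intros h. rewrite Cmul_RtoC_pair. reflexivity.
Qed.

Lemma has_deriv_within_continuous (f : R -> Cpx) a b u v : has_deriv_within f a b u v ->
  forall e, 0 < e -> exists r, 0 < r /\
    forall t, a <= t <= b -> Rabs (t - u) < r -> Cmod (Csub (f t) (f u)) < e.
Proof.
  intros H e He. destruct (H 1 ltac:(lra)) as [r [Hr Hr']].
  pose proof (Cmod_ge0 v).
  exists (Rmin r (e / (Cmod v + 1))). split; [apply Rmin_pos; auto; apply Rdiv_lt_0_compat; lra|].
  intros t Ht Htu. specialize (Hr' (t - u)). replace (u + (t - u)) with t in Hr' by ring.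
  specialize (Hr' Ht (Rlt_le_trans _ _ _ Htu (Rmin_l _ _))).
  assert (Hq : Rabs (t - u) * (Cmod v + 1) < e).
  { apply (Rmult_lt_reg_r (/ (Cmod v + 1))); [apply Rinv_0_lt_compat; lra|].
    rewrite Rmult_assoc, Rinv_r by lra. rewrite Rmult_1_r.
    exact (Rlt_le_trans _ _ _ Htu (Rmin_r _ _)). }
  assert (T1 : Cmod (Csub (f t) (f u)) <= Cmod (Csub (Csub (f t) (f u)) (Cmul (RtoC (t - u)) v))
                                           + Cmod (Cmul (RtoC (t - u)) v)).
  { eapply Rle_trans; [|apply Cmod_triangle]. right. f_equal.
    unfold Csub, Cadd, Copp, Re, Im; simpl. f_equal; ring. }
  rewrite Cmod_Cmul, Cmod_RtoC in T1. pose proof (Rabs_pos (t - u)). nra.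
Qed.

Lemma has_deriv_within_line (h : Cpx -> Cpx) d z0 v a b t0 :
  C_has_deriv h (Cadd z0 (Cmul (RtoC t0) v)) d ->
  has_deriv_within (fun t => h (Cadd z0 (Cmul (RtoC t) v))) a b t0 (Cmul d v).
Proof.
  intros H eps Heps. pose proof (Cmod_ge0 v) as Hv.
  destruct (H (eps / (Cmod v + 1))) as [r [Hr Hr']]; [apply Rdiv_lt_0_compat; lra|].
  exists (r / (Cmod v + 1)). split; [apply Rdiv_lt_0_compat; lra|].
  intros t _ Ht.
  assert (Hm : Cmod (Cmul (RtoC t) v) < r).
  { rewrite Cmod_Cmul, Cmod_RtoC.
    apply (Rmult_lt_reg_r (/ (Cmod v + 1))); [apply Rinv_0_lt_compat; lra|].
    apply Rle_lt_trans with (Rabs t); [|exact Ht].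
    rewrite Rmult_assoc. rewrite <- (Rmult_1_r (Rabs t)) at 2.
    apply Rmult_le_compat_l; [apply Rabs_pos|].
    apply (Rmult_le_reg_r (Cmod v + 1)); [lra|]. rewrite Rmult_assoc, Rinv_l; lra. }
  specialize (Hr' _ Hm).
  replace (Cadd z0 (Cmul (RtoC (t0 + t)) v))
    with (Cadd (Cadd z0 (Cmul (RtoC t0) v)) (Cmul (RtoC t) v))
    by (unfold Cadd, Cmul, RtoC, Re, Im; simpl; f_equal; ring).
  replace (Cmul (RtoC t) (Cmul d v)) with (Cmul d (Cmul (RtoC t) v))
    by (unfold Cmul, RtoC, Re, Im; simpl; f_equal; ring).
  eapply Rle_trans; [exact Hr'|]. rewrite Cmod_Cmul, Cmod_RtoC.
  assert (Hq : Cmod v / (Cmod v + 1) <= 1).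
  { apply (Rmult_le_reg_r (Cmod v + 1)); [lra|]. unfold Rdiv. rewrite Rmult_assoc, Rinv_l; lra. }
  pose proof (Rabs_pos t).
  replace (eps / (Cmod v + 1) * (Rabs t * Cmod v)) with (eps * Rabs t * (Cmod v / (Cmod v + 1)))
    by (field; lra).
  rewrite <- (Rmult_1_r (eps * Rabs t)) at 2. apply Rmult_le_compat_l; nra.
Qed.

Lemma C_has_deriv_continuous (h : Cpx -> Cpx) z d : C_has_deriv h z d ->
  forall eps, 0 < eps -> exists r, 0 < r /\
    forall w, Cmod (Csub w z) < r -> Cmod (Csub (h w) (h z)) < eps.
Proof.
  intros Hd eps He. destruct (Hd 1 ltac:(lra)) as [r [Hr Hr']].
  pose proof (Cmod_ge0 d) as Hd0. set (c := Cmod d + 2).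
  exists (Rmin r (eps / c)). split; [apply Rmin_pos; auto; apply Rdiv_lt_0_compat; unfold c; lra|].
  intros w Hw. set (k := Csub w z).
  assert (Ew : w = Cadd z k) by (destruct w; unfold k, Csub, Cadd, Copp, Re, Im; simpl; f_equal; ring).
  specialize (Hr' k (Rlt_le_trans _ _ _ Hw (Rmin_l _ _))). rewrite <- Ew in Hr'.
  assert (T1 : Cmod (Csub (h w) (h z)) <= Cmod (Csub (Csub (h w) (h z)) (Cmul d k)) + Cmod (Cmul d k)).
  { eapply Rle_trans; [|apply Cmod_triangle]. right. f_equal.
    unfold Csub, Cadd, Copp, Re, Im; simpl. f_equal; ring. }
  rewrite Cmod_Cmul in T1. pose proof (Cmod_ge0 k).
  assert (Cmod k * c < eps).
  { apply (Rmult_lt_reg_r (/ c)); [apply Rinv_0_lt_compat; unfold c; lra|].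
    rewrite Rmult_assoc, Rinv_r by (unfold c; lra). rewrite Rmult_1_r.
    exact (Rlt_le_trans _ _ _ Hw (Rmin_r _ _)). }
  unfold c in *. nra.
Qed.

Lemma derivable_pt_lim_continuity_pt f x l : derivable_pt_lim f x l -> continuity_pt f x.
Proof. intros H. apply derivable_continuous_pt. exists l. exact H. Qed.

Lemma derivable_pt_lim_scal_l a f x l :
  derivable_pt_lim f x l -> derivable_pt_lim (fun y => a * f y) x (a * l).
Proof. intros H. exact (derivable_pt_lim_scal f a x l H). Qed.

Lemma derivable_pt_lim_linear a x : derivable_pt_lim (fun y => a * y) x a.
Proof.
  pose proof (derivable_pt_lim_scal_l a (fun y => y) x 1 (derivable_pt_lim_id x)) as H.
  rewrite Rmult_1_r in H. exact H.
Qed.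

Lemma derivable_pt_lim_exp_linear a x :
  derivable_pt_lim (fun y => exp (a * y)) x (exp (a * x) * a).
Proof.
  apply (derivable_pt_lim_comp (fun y => a * y) exp).
  - apply derivable_pt_lim_linear.
  - apply derivable_pt_lim_exp.
Qed.

Lemma nonincreasing_of_deriv_nonpos (F dF : R -> R) a b : a <= b ->
  (forall x, a < x < b -> derivable_pt_lim F x (dF x)) ->
  (forall x, a < x < b -> dF x <= 0) ->
  (forall x, a <= x <= b -> continuity_pt F x) -> F b <= F a.
Proof.
  intros Hab Hd Hn Hc. destruct (Req_dec a b) as [<-|Hne]; [lra|].
  assert (pr1 : forall c, a < c < b -> derivable_pt F c) by (intros c Hc'; exists (dF c); apply Hd; exact Hc').
  assert (pr2 : forall c, a < c < b -> derivable_pt id c) by (intros; apply derivable_pt_id).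
  destruct (MVT F id a b pr1 pr2) as [c [P HP]]; try lra; auto.
  { intros. apply derivable_continuous_pt, derivable_pt_id. }
  rewrite (derive_pt_eq_0 F c (dF c) (pr1 c P) (Hd c P)) in HP.
  rewrite (derive_pt_eq_0 id c 1 (pr2 c P) (derivable_pt_lim_id c)) in HP.
  unfold id in HP. specialize (Hn c P). nra.
Qed.

Lemma nondecreasing_of_deriv_nonneg (F dF : R -> R) a b : a <= b ->
  (forall x, a < x < b -> derivable_pt_lim F x (dF x)) ->
  (forall x, a < x < b -> 0 <= dF x) ->
  (forall x, a <= x <= b -> continuity_pt F x) -> F a <= F b.
Proof.
  intros Hab Hd Hn Hc.
  enough (- F b <= - F a) by lra.
  apply (nonincreasing_of_deriv_nonpos (fun x => - F x) (fun x => - dF x) a b Hab).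
  - intros. apply derivable_pt_lim_opp. auto.
  - intros x Hx. specialize (Hn x Hx). lra.
  - intros. apply continuity_pt_opp. auto.
Qed.

Lemma Rabs_sub_le_of_deriv_bound (F dF : R -> R) a b c : a <= b ->
  (forall x, a <= x <= b -> derivable_pt_lim F x (dF x)) ->
  (forall x, a <= x <= b -> Rabs (dF x) <= c) ->
  Rabs (F b - F a) <= c * (b - a).
Proof.
  intros Hab Hd Hc.
  assert (Hcont : forall G dG, (forall x, a <= x <= b -> derivable_pt_lim G x (dG x)) ->
                  forall x, a <= x <= b -> continuity_pt G x)
    by (intros G dG HG x Hx; exact (derivable_pt_lim_continuity_pt _ _ _ (HG x Hx))).
  assert (Hup : F b - c * b <= F a - c * a).
  { apply (nonincreasing_of_deriv_nonpos (fun x => F x - c * x) (fun x => dF x - c)); auto.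
    - intros x Hx. apply derivable_pt_lim_minus; [apply Hd; lra | apply derivable_pt_lim_linear].
    - intros x Hx. specialize (Hc x ltac:(lra)). apply Rabs_le_between in Hc. lra.
    - apply (Hcont _ (fun x => dF x - c)). intros x Hx.
      apply derivable_pt_lim_minus; [apply Hd; lra | apply derivable_pt_lim_linear]. }
  assert (Hlow : F a + c * a <= F b + c * b).
  { apply (nondecreasing_of_deriv_nonneg (fun x => F x + c * x) (fun x => dF x + c)); auto.
    - intros x Hx. apply derivable_pt_lim_plus; [apply Hd; lra | apply derivable_pt_lim_linear].
    - intros x Hx. specialize (Hc x ltac:(lra)). apply Rabs_le_between in Hc. lra.
    - apply (Hcont _ (fun x => dF x + c)). intros x Hx.
      apply derivable_pt_lim_plus; [apply Hd; lra | apply derivable_pt_lim_linear]. }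
  apply Rabs_le. lra.
Qed.

Lemma derivable_pt_lim_RInt (g : R -> R) : (forall x, continuity_pt g x) ->
  forall x, derivable_pt_lim (fun u => RInt g 0 u) x (g x).
Proof.
  intros Hg x. apply is_derive_Reals. apply (is_derive_RInt g (RInt g 0) 0 x).
  - apply filter_forall. intros y. apply (RInt_correct (V:=R_CompleteNormedModule)).
    apply ex_RInt_continuous. intros z _. apply continuity_pt_filterlim. apply Hg.
  - apply continuity_pt_filterlim. apply Hg.
Qed.

Lemma RInt_minus_continuous (f1 f2 : R -> R) u :
  (forall x, continuity_pt f1 x) -> (forall x, continuity_pt f2 x) ->
  RInt f1 0 u - RInt f2 0 u = RInt (fun t => f1 t - f2 t) 0 u.
Proof.
  intros H1 H2. symmetry. apply (RInt_minus (V:=R_CompleteNormedModule));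
  apply ex_RInt_continuous; intros; apply continuity_pt_filterlim; auto.
Qed.

Lemma Rabs_RInt_le_antiderivative (g H h : R -> R) X : 0 <= X ->
  (forall x, continuity_pt g x) ->
  (forall x, 0 <= x <= X -> derivable_pt_lim H x (h x)) ->
  (forall x, 0 <= x <= X -> Rabs (g x) <= h x) ->
  Rabs (RInt g 0 X) <= H X - H 0.
Proof.
  intros HX Hg HH Hb.
  assert (R0 : RInt g 0 0 = 0) by apply (RInt_point (V:=R_CompleteNormedModule)).
  assert (Hint := derivable_pt_lim_RInt g Hg).
  assert (Hcont : forall x, 0 <= x <= X -> continuity_pt H x)
    by (intros x Hx; exact (derivable_pt_lim_continuity_pt _ _ _ (HH x Hx))).
  assert (A1 : RInt g 0 X - H X <= RInt g 0 0 - H 0).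
  { apply (nonincreasing_of_deriv_nonpos (fun u => RInt g 0 u - H u) (fun u => g u - h u)); auto.
    - intros x Hx. apply derivable_pt_lim_minus; [apply Hint | apply HH; lra].
    - intros x Hx. specialize (Hb x ltac:(lra)). apply Rabs_le_between in Hb. lra.
    - intros x Hx. apply continuity_pt_minus; auto.
      exact (derivable_pt_lim_continuity_pt _ _ _ (Hint x)). }
  assert (A2 : - RInt g 0 X - H X <= - RInt g 0 0 - H 0).
  { apply (nonincreasing_of_deriv_nonpos (fun u => - RInt g 0 u - H u) (fun u => - g u - h u)); auto.
    - intros x Hx. apply derivable_pt_lim_minus; [apply derivable_pt_lim_opp, Hint | apply HH; lra].
    - intros x Hx. specialize (Hb x ltac:(lra)). apply Rabs_le_between in Hb. lra.
    - intros x Hx. apply continuity_pt_minus; auto. apply continuity_pt_opp.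
      exact (derivable_pt_lim_continuity_pt _ _ _ (Hint x)). }
  rewrite R0 in A1, A2. apply Rabs_le. lra.
Qed.

Lemma two_pow_pos n : 0 < 2 ^ n.
Proof. apply pow_lt. lra. Qed.

Lemma INR_le_pow2 n : INR n <= 2 ^ n.
Proof.
  induction n as [|n IH]; [simpl; lra|]. rewrite S_INR. simpl.
  destruct n; [simpl; lra|]. rewrite S_INR in *. pose proof (pos_INR n). lra.
Qed.

Lemma exists_div_pow2_lt c eps : 0 < eps -> exists n, c / 2 ^ n < eps.
Proof.
  intros He. destruct (INR_unbounded (c / eps)) as [n Hn]. exists n.
  pose proof (INR_le_pow2 n). pose proof (two_pow_pos n).
  assert (c < eps * INR n).
  { apply (Rmult_lt_compat_r eps) in Hn; auto. unfold Rdiv in Hn.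
    rewrite Rmult_assoc, Rinv_l in Hn; lra. }
  apply Rmult_lt_reg_r with (2 ^ n); auto. unfold Rdiv. rewrite Rmult_assoc, Rinv_l by lra.
  nra.
Qed.

Lemma eq0_of_le_div_pow2 x c : 0 <= x -> (forall n, x <= c / 2 ^ n) -> x = 0.
Proof.
  intros H0 H. destruct (Req_dec x 0); auto. exfalso.
  destruct (exists_div_pow2_lt c x) as [n Hn]; [lra|]. specialize (H n). lra.
Qed.

Lemma Lim_seq_dist_le_div_pow2 (a : nat -> R) c : 0 <= c ->
  (forall n m, (n <= m)%nat -> Rabs (a m - a n) <= c / 2 ^ n) ->
  forall n, Rabs (Lim_seq a - a n) <= c / 2 ^ n.
Proof.
  intros Hc H.
  assert (Hdec : forall n m, (n <= m)%nat -> c / 2 ^ m <= c / 2 ^ n).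
  { intros n m Hnm. unfold Rdiv. apply Rmult_le_compat_l; auto.
    apply Rinv_le_contravar; [apply two_pow_pos | apply Rle_pow; [lra|lia]]. }
  assert (Hex : ex_finite_lim_seq a).
  { apply ex_lim_seq_cauchy_corr. intros eps.
    destruct (exists_div_pow2_lt c eps) as [N HN]; [apply cond_pos|].
    exists N. intros n m Hn Hm. destruct (Nat.le_ge_cases n m).
    - rewrite Rabs_minus_sym. eapply Rle_lt_trans; [apply H; auto|].
      eapply Rle_lt_trans; [apply Hdec; eauto | auto].
    - eapply Rle_lt_trans; [apply H; auto|].
      eapply Rle_lt_trans; [apply Hdec; eauto | auto]. }
  apply Lim_seq_correct' in Hex. apply is_lim_seq_Reals in Hex.
  intros n. apply Rnot_lt_le. intros Hlt.
  set (e := Rabs (Lim_seq a - a n) - c / 2 ^ n).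
  destruct (Hex e) as [N HN]; [unfold e; lra|].
  specialize (HN (max N n) (Nat.le_max_l _ _)). unfold Rdist in HN.
  specialize (H n (max N n) (Nat.le_max_r _ _)).
  pose proof (Rabs_triang (a (max N n) - a n) (Lim_seq a - a (max N n))).
  replace (a (max N n) - a n + (Lim_seq a - a (max N n))) with (Lim_seq a - a n) in H0 by ring.
  rewrite Rabs_minus_sym in HN. unfold e in HN. lra.
Qed.

(* Apply the two steps at the supremum of the [x] such that [P] holds on [[0, x]]. *)
Lemma continuous_induction (b : R) (P : R -> Prop) : 0 <= b ->
  (forall m, 0 <= m <= b -> (forall t, 0 <= t < m -> P t) -> P m) ->
  (forall m, 0 <= m < b -> (forall t, 0 <= t <= m -> P t) ->
     exists m', m < m' /\ forall t, m <= t <= m' -> P t) ->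
  forall t, 0 <= t <= b -> P t.
Proof.
  intros Hb Hclosed Hopen.
  set (E := fun x => 0 <= x <= b /\ forall t, 0 <= t <= x -> P t).
  assert (E0 : E 0).
  { split; [lra|]. intros t Ht. replace t with 0 by lra.
    apply Hclosed; [lra | intros; lra]. }
  destruct (completeness E) as [m [Hub Hlub]].
  { exists b. intros x [Hx _]. lra. }
  { exists 0. exact E0. }
  assert (Hm0 : 0 <= m) by (apply Hub; exact E0).
  assert (Hmb : m <= b) by (apply Hlub; intros x [Hx _]; lra).
  assert (Hbelow : forall t, 0 <= t < m -> P t).
  { intros t Ht. destruct (Classical_Prop.classic (exists x, E x /\ t <= x)) as [[x [[_ Hx] Htx]]|Hno].
    - apply Hx. lra.
    - enough (m <= t) by lra. apply Hlub. intros x Ex.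
      destruct (Rle_dec x t) as [|Hn]; [lra|]. exfalso. apply Hno. exists x. split; [auto|lra]. }
  assert (Hupto : forall t, 0 <= t <= m -> P t).
  { intros t Ht. destruct (Req_dec t m) as [->|]; [apply Hclosed; auto | apply Hbelow; lra]. }
  assert (Hmeq : m = b).
  { destruct (Req_dec m b) as [|Hne]; auto. exfalso.
    destruct (Hopen m ltac:(lra) Hupto) as [m' [Hmm' Hm']].
    assert (Hlt : m < Rmin m' b) by (apply Rmin_glb_lt; lra).
    assert (Ex : E (Rmin m' b)).
    { split; [split; [lra | apply Rmin_r]|].
      intros t Ht. destruct (Rle_dec t m); [apply Hupto; lra|].
      apply Hm'. pose proof (Rmin_l m' b). lra. }
    apply Hub in Ex. lra. }
  subst m. exact Hupto.
Qed.

(** * Picard iteration *)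

Definition clamp (a b t : R) : R := Rmax a (Rmin t b).

Lemma clamp_range a b t : a <= b -> a <= clamp a b t <= b.
Proof. intros. unfold clamp. split; [apply Rmax_l | apply Rmax_lub; [lra | apply Rmin_r]]. Qed.

Lemma clamp_id a b t : a <= t <= b -> clamp a b t = t.
Proof. intros. unfold clamp. rewrite Rmin_left, Rmax_right; lra. Qed.

Lemma clamp_lipschitz a b x y : a <= b -> Rabs (clamp a b x - clamp a b y) <= Rabs (x - y).
Proof. intros. unfold clamp, Rmax, Rmin. repeat destruct Rle_dec; unfold Rabs; repeat destruct Rcase_abs; lra. Qed.

Lemma clamp_near a b d x : a <= b -> 0 <= d -> a - d <= x <= b + d -> Rabs (x - clamp a b x) <= d.
Proof. intros. unfold clamp, Rmax, Rmin. repeat destruct Rle_dec; unfold Rabs; repeat destruct Rcase_abs; lra. Qed.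

Lemma clamp_continuous a b t : a <= b -> continuity_pt (clamp a b) t.
Proof.
  intros Hab. apply continuity_pt_ball. intros eps He. exists eps. split; auto. intros x Hx.
  eapply Rle_lt_trans; [apply clamp_lipschitz | ]; auto.
Qed.

Section Picard.

Variables (b : R) (w0 : Cpx) (Q : Cpx -> Cpx) (L KD : R) (D : R -> Cpx).
Hypothesis hb : 0 < b.
Hypothesis hL : 0 < L.
Hypothesis HQ : forall z w, Cmod (Csub (Q z) (Q w)) <= L * Cmod (Csub z w).
Hypothesis HDc : forall t, Ccontinuous_at D t.
Hypothesis HDb : forall t, Cmod (D t) <= KD.

(* Freezing the argument of [Q] outside [[0, b]] makes the iterates continuous
   on all of [R], so that their integrals are defined everywhere. *)
Definition picard_field (g : R -> Cpx) t := Cadd (Q (g (clamp 0 b t))) (D t).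

Definition picard_integral (g : R -> Cpx) u : Cpx :=
  (RInt (fun t => Re (picard_field g t)) 0 u, RInt (fun t => Im (picard_field g t)) 0 u).

Fixpoint picard_iter n : R -> Cpx :=
  match n with
  | O => fun _ => w0
  | S m => fun u => Cadd w0 (picard_integral (picard_iter m) (clamp 0 b u))
  end.

Lemma picard_field_continuous g : (forall t, Ccontinuous_at g t) ->
  forall t, Ccontinuous_at (picard_field g) t.
Proof.
  intros Hg t. apply Ccontinuous_at_add; auto.
  apply (Ccontinuous_at_lipschitz Q L (fun u => g (clamp 0 b u))); auto.
  apply Ccontinuous_at_comp; auto. apply clamp_continuous. lra.
Qed.

Lemma picard_integral_continuous g : (forall t, Ccontinuous_at g t) ->
  forall u, Ccontinuous_at (fun u => picard_integral g (clamp 0 b u)) u.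
Proof.
  intros Hg u.
  assert (Hc : forall p : R -> R, (forall x, continuity_pt p x) ->
            continuity_pt (fun u => RInt p 0 (clamp 0 b u)) u).
  { intros p Hp. apply (continuity_pt_comp (clamp 0 b) (fun v => RInt p 0 v)).
    - apply clamp_continuous. lra.
    - exact (derivable_pt_lim_continuity_pt _ _ _ (derivable_pt_lim_RInt p Hp _)). }
  apply Ccontinuous_at_pair; apply Hc; intros x.
  - apply Ccontinuous_at_Re, picard_field_continuous, Hg.
  - apply Ccontinuous_at_Im, picard_field_continuous, Hg.
Qed.

Lemma picard_iter_continuous n : forall t, Ccontinuous_at (picard_iter n) t.
Proof.
  induction n as [|n IH]; intros t; simpl; [apply Ccontinuous_at_const|].
  apply Ccontinuous_at_add; [apply Ccontinuous_at_const | apply picard_integral_continuous, IH].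
Qed.

Lemma Cmod_picard_integral_le g u (H h : R -> R) : 0 <= u -> (forall t, Ccontinuous_at g t) ->
  (forall x, 0 <= x <= u -> derivable_pt_lim H x (h x)) ->
  (forall x, 0 <= x <= u -> Cmod (picard_field g x) <= h x) ->
  Cmod (picard_integral g u) <= 2 * (H u - H 0).
Proof.
  intros Hu Hg HH Hh. eapply Rle_trans; [apply Cmod_le_Rabs_Re_Im|]. unfold picard_integral.
  change (Rabs (RInt (fun t => Re (picard_field g t)) 0 u)
          + Rabs (RInt (fun t => Im (picard_field g t)) 0 u) <= 2 * (H u - H 0)).
  assert (A1 : Rabs (RInt (fun t => Re (picard_field g t)) 0 u) <= H u - H 0).
  { apply (Rabs_RInt_le_antiderivative _ H h); auto.
    - intros. apply Ccontinuous_at_Re, picard_field_continuous, Hg.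
    - intros x Hx. eapply Rle_trans; [apply Rabs_Re_le_Cmod | auto]. }
  assert (A2 : Rabs (RInt (fun t => Im (picard_field g t)) 0 u) <= H u - H 0).
  { apply (Rabs_RInt_le_antiderivative _ H h); auto.
    - intros. apply Ccontinuous_at_Im, picard_field_continuous, Hg.
    - intros x Hx. eapply Rle_trans; [apply Rabs_Im_le_Cmod | auto]. }
  lra.
Qed.

Lemma picard_integral_dist_le g1 g2 u (H h : R -> R) : 0 <= u <= b ->
  (forall t, Ccontinuous_at g1 t) -> (forall t, Ccontinuous_at g2 t) ->
  (forall x, 0 <= x <= u -> derivable_pt_lim H x (h x)) ->
  (forall x, 0 <= x <= u -> L * Cmod (Csub (g1 x) (g2 x)) <= h x) ->
  Cmod (Csub (picard_integral g1 u) (picard_integral g2 u)) <= 2 * (H u - H 0).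
Proof.
  intros Hu H1 H2 HH Hh. eapply Rle_trans; [apply Cmod_le_Rabs_Re_Im|].
  change (Rabs (RInt (fun t => Re (picard_field g1 t)) 0 u - RInt (fun t => Re (picard_field g2 t)) 0 u)
        + Rabs (RInt (fun t => Im (picard_field g1 t)) 0 u - RInt (fun t => Im (picard_field g2 t)) 0 u)
        <= 2 * (H u - H 0)).
  assert (Hfield : forall x, 0 <= x <= u ->
    Csub (picard_field g1 x) (picard_field g2 x) = Csub (Q (g1 x)) (Q (g2 x))).
  { intros x Hx. unfold picard_field. rewrite clamp_id by lra.
    unfold Csub, Cadd, Copp, Re, Im; simpl. f_equal; ring. }
  assert (Hcont : forall p : Cpx -> R,
     (forall k z, Ccontinuous_at k z -> continuity_pt (fun t => p (k t)) z) ->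
     forall g, (forall t, Ccontinuous_at g t) ->
     forall x, continuity_pt (fun t => p (picard_field g t)) x)
    by (intros p Hp g Hg x; apply Hp, picard_field_continuous, Hg).
  rewrite (RInt_minus_continuous (fun t => Re (picard_field g1 t)) (fun t => Re (picard_field g2 t)))
    by (apply Hcont; auto using Ccontinuous_at_Re).
  rewrite (RInt_minus_continuous (fun t => Im (picard_field g1 t)) (fun t => Im (picard_field g2 t)))
    by (apply Hcont; auto using Ccontinuous_at_Im).
  assert (A1 : Rabs (RInt (fun t => Re (picard_field g1 t) - Re (picard_field g2 t)) 0 u) <= H u - H 0).
  { apply (Rabs_RInt_le_antiderivative _ H h); try lra; auto.
    - intros x. apply continuity_pt_minus; apply Hcont; auto using Ccontinuous_at_Re.
    - intros x Hx. change (Rabs (Re (Csub (picard_field g1 x) (picard_field g2 x))) <= h x).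
      rewrite Hfield by lra. eapply Rle_trans; [apply Rabs_Re_le_Cmod|].
      eapply Rle_trans; [apply HQ | auto]. }
  assert (A2 : Rabs (RInt (fun t => Im (picard_field g1 t) - Im (picard_field g2 t)) 0 u) <= H u - H 0).
  { apply (Rabs_RInt_le_antiderivative _ H h); try lra; auto.
    - intros x. apply continuity_pt_minus; apply Hcont; auto using Ccontinuous_at_Im.
    - intros x Hx. change (Rabs (Im (Csub (picard_field g1 x) (picard_field g2 x))) <= h x).
      rewrite Hfield by lra. eapply Rle_trans; [apply Rabs_Im_le_Cmod|].
      eapply Rle_trans; [apply HQ | auto]. }
  lra.
Qed.

Definition picard_gap0 := 2 * b * (Cmod (Q w0) + KD) + 1.

Lemma picard_gap0_pos : 0 < picard_gap0.
Proof.
  unfold picard_gap0. pose proof (Cmod_ge0 (Q w0)).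
  pose proof (Rle_trans _ _ _ (Cmod_ge0 (D 0)) (HDb 0)). nra.
Qed.

(* The weight [exp (4 L u)] turns the Picard map into a contraction of ratio 1/2
   (one factor 2 is lost by integrating real and imaginary parts separately). *)
Lemma picard_iter_step n u :
  Cmod (Csub (picard_iter (S n) u) (picard_iter n u)) <= picard_gap0 * exp (4 * L * clamp 0 b u) / 2 ^ n.
Proof.
  pose proof picard_gap0_pos as HA. pose proof (clamp_range 0 b u ltac:(lra)) as Hcl.
  revert u Hcl. induction n as [|n IH]; intros u Hcl.
  - replace (Csub (picard_iter 1 u) (picard_iter 0 u)) with (picard_integral (fun _ => w0) (clamp 0 b u))
      by (simpl; destruct picard_integral; unfold Csub, Cadd, Copp, Re, Im; simpl; f_equal; ring).
    set (K0 := Cmod (Q w0) + KD).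
    eapply Rle_trans.
    { apply (Cmod_picard_integral_le _ _ (fun x => K0 * x) (fun _ => K0)); try lra.
      - intros. apply Ccontinuous_at_const.
      - intros. apply derivable_pt_lim_linear.
      - intros x _. eapply Rle_trans; [apply Cmod_triangle|]. pose proof (HDb x). unfold K0. lra. }
    assert (1 <= exp (4 * L * clamp 0 b u)) by (pose proof (exp_ineq1_le (4 * L * clamp 0 b u)); nra).
    assert (0 <= K0) by (unfold K0; pose proof (Cmod_ge0 (Q w0));
                         pose proof (Rle_trans _ _ _ (Cmod_ge0 (D 0)) (HDb 0)); lra).
    simpl. rewrite Rdiv_1_r. unfold picard_gap0. fold K0.
    assert (0 <= K0 * (b - clamp 0 b u)) by (apply Rmult_le_pos; lra).
    assert (0 <= (2 * b * K0 + 1) * (exp (4 * L * clamp 0 b u) - 1)) by (apply Rmult_le_pos; nra).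
    nra.
  - change (Cmod (Csub (Cadd w0 (picard_integral (picard_iter (S n)) (clamp 0 b u)))
                       (Cadd w0 (picard_integral (picard_iter n) (clamp 0 b u))))
            <= picard_gap0 * exp (4 * L * clamp 0 b u) / 2 ^ S n).
    rewrite Csub_Cadd_l. pose proof (two_pow_pos n) as Hp.
    set (c := picard_gap0 / (4 * 2 ^ n)).
    eapply Rle_trans.
    { apply (picard_integral_dist_le _ _ _ (fun x => c * exp (4 * L * x))
               (fun x => c * (exp (4 * L * x) * (4 * L)))); auto using picard_iter_continuous.
      - intros x _. apply derivable_pt_lim_scal_l, derivable_pt_lim_exp_linear.
      - intros x Hx. specialize (IH x (clamp_range 0 b x ltac:(lra))). rewrite clamp_id in IH by lra.
        apply Rle_trans with (L * (picard_gap0 * exp (4 * L * x) / 2 ^ n)).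
        + apply Rmult_le_compat_l; lra.
        + right. unfold c. field. lra. }
    pose proof (exp_pos (4 * L * 0)). assert (0 < c) by (unfold c; apply Rdiv_lt_0_compat; lra).
    apply Rle_trans with (2 * (c * exp (4 * L * clamp 0 b u))); [nra|].
    right. unfold c. simpl. field. lra.
Qed.

Definition picard_rate := picard_gap0 * exp (4 * L * b).

Lemma picard_rate_pos : 0 < picard_rate.
Proof. unfold picard_rate. pose proof picard_gap0_pos. pose proof (exp_pos (4 * L * b)). nra. Qed.

Lemma picard_iter_cauchy n m u : (n <= m)%nat ->
  Cmod (Csub (picard_iter m u) (picard_iter n u)) <= 2 * picard_rate / 2 ^ n.
Proof.
  intros Hnm. replace m with (n + (m - n))%nat by lia. generalize (m - n)%nat as k.
  assert (Hstep : forall k, Cmod (Csub (picard_iter (S k) u) (picard_iter k u)) <= picard_rate / 2 ^ k).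
  { intros k. eapply Rle_trans; [apply picard_iter_step|].
    unfold picard_rate, Rdiv. apply Rmult_le_compat_r; [left; apply Rinv_0_lt_compat, two_pow_pos|].
    apply Rmult_le_compat_l; [left; apply picard_gap0_pos|].
    pose proof (clamp_range 0 b u ltac:(lra)).
    destruct (Req_dec (clamp 0 b u) b) as [->|]; [lra|].
    left. apply exp_increasing. apply Rmult_lt_compat_l; lra. }
  enough (forall k, Cmod (Csub (picard_iter (n + k) u) (picard_iter n u))
                    <= 2 * picard_rate / 2 ^ n - 2 * picard_rate / 2 ^ (n + k)).
  { intros k. specialize (H k). pose proof (two_pow_pos (n + k)). pose proof picard_rate_pos.
    assert (0 <= 2 * picard_rate / 2 ^ (n + k)) by (apply Rlt_le, Rdiv_lt_0_compat; lra). lra. }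
  induction k as [|k IH].
  - rewrite Nat.add_0_r. replace (Csub (picard_iter n u) (picard_iter n u)) with (RtoC 0)
      by (unfold Csub, Cadd, Copp, RtoC; f_equal; simpl; ring).
    rewrite Cmod_RtoC, Rabs_R0. lra.
  - eapply Rle_trans; [apply (Cmod_Csub_triangle _ (picard_iter (n + k) u))|].
    replace (n + S k)%nat with (S (n + k)) by lia.
    pose proof (Hstep (n + k)%nat). pose proof (two_pow_pos (n + k)). simpl pow.
    replace (2 * picard_rate / (2 * 2 ^ (n + k))) with (picard_rate / 2 ^ (n + k)) by (field; lra).
    replace (2 * picard_rate / 2 ^ (n + k)) with (2 * (picard_rate / 2 ^ (n + k))) in IH by (field; lra).
    lra.
Qed.

Definition picard_limit u : Cpx :=
  (real (Lim_seq (fun n => Re (picard_iter n u))), real (Lim_seq (fun n => Im (picard_iter n u)))).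

Lemma picard_limit_close n u : Cmod (Csub (picard_limit u) (picard_iter n u)) <= 4 * picard_rate / 2 ^ n.
Proof.
  pose proof picard_rate_pos.
  eapply Rle_trans; [apply Cmod_le_Rabs_Re_Im|].
  change (Rabs (Lim_seq (fun n => Re (picard_iter n u)) - Re (picard_iter n u))
        + Rabs (Lim_seq (fun n => Im (picard_iter n u)) - Im (picard_iter n u)) <= 4 * picard_rate / 2 ^ n).
  assert (A1 : Rabs (Lim_seq (fun n => Re (picard_iter n u)) - Re (picard_iter n u)) <= 2 * picard_rate / 2 ^ n).
  { apply (Lim_seq_dist_le_div_pow2 (fun n => Re (picard_iter n u))); [lra|]. intros n0 m Hnm.
    eapply Rle_trans; [apply (Rabs_Re_le_Cmod (Csub (picard_iter m u) (picard_iter n0 u)))|].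
    apply picard_iter_cauchy; auto. }
  assert (A2 : Rabs (Lim_seq (fun n => Im (picard_iter n u)) - Im (picard_iter n u)) <= 2 * picard_rate / 2 ^ n).
  { apply (Lim_seq_dist_le_div_pow2 (fun n => Im (picard_iter n u))); [lra|]. intros n0 m Hnm.
    eapply Rle_trans; [apply (Rabs_Im_le_Cmod (Csub (picard_iter m u) (picard_iter n0 u)))|].
    apply picard_iter_cauchy; auto. }
  unfold Rdiv in *. lra.
Qed.

Lemma picard_limit_continuous t : Ccontinuous_at picard_limit t.
Proof.
  intros eps He. destruct (exists_div_pow2_lt (4 * picard_rate) (eps / 3)) as [n Hn]; [lra|].
  destruct (picard_iter_continuous n t (eps / 3)) as [d [Hd Hd']]; [lra|].
  exists d. split; auto. intros t' Ht'.
  eapply Rle_lt_trans; [apply (Cmod_Csub_triangle _ (picard_iter n t'))|].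
  eapply Rle_lt_trans; [apply Rplus_le_compat_l, (Cmod_Csub_triangle _ (picard_iter n t))|].
  pose proof (picard_limit_close n t'). pose proof (picard_limit_close n t). specialize (Hd' t' Ht').
  rewrite (Cmod_Csub_sym (picard_iter n t)). lra.
Qed.

Lemma picard_limit_fixpoint u : 0 <= u <= b -> Cadd w0 (picard_integral picard_limit u) = picard_limit u.
Proof.
  intros Hu. apply Cmod_Csub_eq0.
  apply (eq0_of_le_div_pow2 _ (8 * L * picard_rate * b + 2 * picard_rate)); [apply Cmod_ge0|]. intros n.
  pose proof (two_pow_pos n). pose proof picard_rate_pos.
  eapply Rle_trans; [apply (Cmod_Csub_triangle _ (picard_iter (S n) u))|].
  assert (E1 : Cmod (Csub (Cadd w0 (picard_integral picard_limit u)) (picard_iter (S n) u))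
               <= 8 * L * picard_rate * b / 2 ^ n).
  { simpl picard_iter. rewrite clamp_id by auto. rewrite Csub_Cadd_l.
    set (c := L * (4 * picard_rate / 2 ^ n)).
    eapply Rle_trans.
    { apply (picard_integral_dist_le _ _ u (fun x => c * x) (fun _ => c));
        auto using picard_limit_continuous, picard_iter_continuous.
      - intros. apply derivable_pt_lim_linear.
      - intros. apply Rmult_le_compat_l; [lra | apply picard_limit_close]. }
    assert (0 <= c) by (unfold c; apply Rmult_le_pos; [lra | apply Rlt_le, Rdiv_lt_0_compat; lra]).
    apply Rle_trans with (2 * (c * b)); [nra|]. right. unfold c. field. lra. }
  assert (E2 : Cmod (Csub (picard_iter (S n) u) (picard_limit u)) <= 2 * picard_rate / 2 ^ n).
  { rewrite Cmod_Csub_sym. eapply Rle_trans; [apply picard_limit_close|]. simpl pow.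
    right. field. lra. }
  replace ((8 * L * picard_rate * b + 2 * picard_rate) / 2 ^ n)
    with (8 * L * picard_rate * b / 2 ^ n + 2 * picard_rate / 2 ^ n) by (field; lra).
  lra.
Qed.

Theorem picard_lindelof : exists F : R -> Cpx,
  F 0 = w0 /\ (forall t, Ccontinuous_at F t) /\
  forall u, 0 <= u <= b -> has_deriv_within F 0 b u (Cadd (Q (F u)) (D u)).
Proof.
  assert (HRe := derivable_pt_lim_RInt (fun t => Re (picard_field picard_limit t))
    (fun t => Ccontinuous_at_Re _ _ (picard_field_continuous _ picard_limit_continuous t))).
  assert (HIm := derivable_pt_lim_RInt (fun t => Im (picard_field picard_limit t))
    (fun t => Ccontinuous_at_Im _ _ (picard_field_continuous _ picard_limit_continuous t))).
  exists (fun u => Cadd w0 (picard_integral picard_limit u)). split; [|split].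
  - unfold picard_integral. rewrite !(RInt_point (V:=R_CompleteNormedModule)).
    destruct w0. unfold Cadd, Re, Im. simpl. f_equal; apply Rplus_0_r.
  - intros t. apply Ccontinuous_at_add; [apply Ccontinuous_at_const|].
    apply Ccontinuous_at_pair; eapply derivable_pt_lim_continuity_pt; [apply HRe | apply HIm].
  - intros u Hu. rewrite picard_limit_fixpoint by auto.
    replace (Cadd (Q (picard_limit u)) (D u)) with (Re (picard_field picard_limit u), Im (picard_field picard_limit u))
      by (unfold picard_field; rewrite clamp_id by auto; reflexivity).
    apply has_deriv_within_pair.
    + pose proof (derivable_pt_lim_plus _ _ u 0 _ (derivable_pt_lim_const (Re w0) u) (HRe u)) as Hd.
      rewrite Rplus_0_l in Hd. exact Hd.
    + pose proof (derivable_pt_lim_plus _ _ u 0 _ (derivable_pt_lim_const (Im w0) u) (HIm u)) as Hd.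
      rewrite Rplus_0_l in Hd. exact Hd.
Qed.

End Picard.

Lemma Cdiv_neg2_pair z :
  Cdiv (RtoC (-2)) z = (-2 * Re z / (Re z ^ 2 + Im z ^ 2), 2 * Im z / (Re z ^ 2 + Im z ^ 2)).
Proof. unfold Cdiv, Cmul, Cinv, RtoC, Re, Im. simpl. f_equal; unfold Rdiv; ring. Qed.

Lemma Cdiv_neg2_lipschitz a c ra rc : 0 < ra -> 0 < rc -> ra <= Cmod a -> rc <= Cmod c ->
  Cmod (Csub (Cdiv (RtoC (-2)) a) (Cdiv (RtoC (-2)) c)) <= 2 / (ra * rc) * Cmod (Csub a c).
Proof.
  intros Hra Hrc Ha Hc.
  assert (HA : ra ^ 2 <= Re a ^ 2 + Im a ^ 2) by (rewrite <- Cmod_sqr; nra).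
  assert (HC : rc ^ 2 <= Re c ^ 2 + Im c ^ 2) by (rewrite <- Cmod_sqr; nra).
  pose proof (Cmod_ge0 (Csub a c)).
  apply Cmod_le_of_sqr; [apply Rmult_le_pos; [apply Rlt_le, Rdiv_lt_0_compat; nra | auto]|].
  rewrite !Cdiv_neg2_pair.
  change ((-2 * Re a / (Re a ^ 2 + Im a ^ 2) - -2 * Re c / (Re c ^ 2 + Im c ^ 2)) ^ 2
        + (2 * Im a / (Re a ^ 2 + Im a ^ 2) - 2 * Im c / (Re c ^ 2 + Im c ^ 2)) ^ 2
        <= (2 / (ra * rc) * Cmod (Csub a c)) ^ 2).
  replace ((-2 * Re a / (Re a ^ 2 + Im a ^ 2) - -2 * Re c / (Re c ^ 2 + Im c ^ 2)) ^ 2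
         + (2 * Im a / (Re a ^ 2 + Im a ^ 2) - 2 * Im c / (Re c ^ 2 + Im c ^ 2)) ^ 2)
    with (4 * Cmod (Csub a c) ^ 2 / ((Re a ^ 2 + Im a ^ 2) * (Re c ^ 2 + Im c ^ 2)))
    by (rewrite Cmod_sqr; change (Re (Csub a c)) with (Re a - Re c);
        change (Im (Csub a c)) with (Im a - Im c); field; split; nra).
  replace ((2 / (ra * rc) * Cmod (Csub a c)) ^ 2) with (4 * Cmod (Csub a c) ^ 2 / (ra ^ 2 * rc ^ 2))
    by (field; nra).
  unfold Rdiv. apply Rmult_le_compat_l; [nra|].
  apply Rinv_le_contravar; [apply Rmult_lt_0_compat; apply pow_lt; lra | apply Rmult_le_compat; nra].
Qed.

Lemma Re_Im_inner_le_Cmod z w : Re z * Re w + Im z * Im w <= Cmod z * Cmod w.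
Proof.
  pose proof (Cmod_ge0 z). pose proof (Cmod_ge0 w).
  assert ((Re z * Re w + Im z * Im w) ^ 2 <= (Cmod z * Cmod w) ^ 2).
  { rewrite Rpow_mult_distr, !Cmod_sqr.
    pose proof (pow2_ge_0 (Re z * Im w - Im z * Re w)). nra. }
  destruct (Rle_dec (Re z * Re w + Im z * Im w) 0); [nra|].
  apply Rsqr_incr_0_var; [unfold Rsqr; nra | nra].
Qed.

(* Clipping [Im w] below at [eps / 2] makes [-2 / w] globally Lipschitz; the
   a priori bound on the solution shows that the clipping is never active. *)
Definition clip_Im (eps : R) (w : Cpx) : Cpx := (Re w, Rmax (Im w) (eps / 2)).

Lemma clip_Im_id eps w : eps / 2 <= Im w -> clip_Im eps w = w.
Proof. intros. destruct w. unfold clip_Im, Re, Im in *. simpl in *. rewrite Rmax_left; auto. Qed.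

Lemma clipped_field_lipschitz eps z w : 0 < eps ->
  Cmod (Csub (Cdiv (RtoC (-2)) (clip_Im eps z)) (Cdiv (RtoC (-2)) (clip_Im eps w)))
  <= 8 / eps ^ 2 * Cmod (Csub z w).
Proof.
  intros He.
  assert (Hlow : forall v, eps / 2 <= Cmod (clip_Im eps v)).
  { intros v. eapply Rle_trans; [|apply Rabs_Im_le_Cmod]. unfold clip_Im, Im at 1. simpl.
    rewrite Rabs_right; [apply Rmax_r|]. pose proof (Rmax_r (Im v) (eps / 2)). lra. }
  eapply Rle_trans; [apply (Cdiv_neg2_lipschitz _ _ (eps / 2) (eps / 2)); auto; lra|].
  replace (2 / (eps / 2 * (eps / 2))) with (8 / eps ^ 2) by (field; lra).
  apply Rmult_le_compat_l; [apply Rlt_le, Rdiv_lt_0_compat; nra|].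
  unfold Cmod. apply sqrt_le_1_alt.
  change ((Re z - Re w) ^ 2 + (Rmax (Im z) (eps / 2) - Rmax (Im w) (eps / 2)) ^ 2
          <= (Re z - Re w) ^ 2 + (Im z - Im w) ^ 2).
  assert (Rabs (Rmax (Im z) (eps / 2) - Rmax (Im w) (eps / 2)) <= Rabs (Im z - Im w))
    by (unfold Rmax; repeat destruct Rle_dec; unfold Rabs; repeat destruct Rcase_abs; lra).
  rewrite <- (pow2_abs (Rmax (Im z) (eps / 2) - Rmax (Im w) (eps / 2))), <- (pow2_abs (Im z - Im w)).
  pose proof (Rabs_pos (Rmax (Im z) (eps / 2) - Rmax (Im w) (eps / 2))). nra.
Qed.

(* With [|l| <= (21/20) sqrt t] and [y >= sqrt (2 t)] one has
   [|4 l x| <= 3 y |x| <= (3/2) (x^2 + y^2)]. *)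
Lemma lyapunov_rate_lower x y l B t : 0 <= t -> 0 < y -> 2 * t <= y ^ 2 ->
  l ^ 2 <= 441 / 400 * t -> Rabs (y * B) <= 1 / 20 ->
  12 / 5 <= 4 + 4 * l * x / (x ^ 2 + y ^ 2) + 2 * y * B.
Proof.
  intros Ht Hy Hy2 Hl HB.
  assert (Hr : 0 < x ^ 2 + y ^ 2) by nra.
  assert (L2 : 2 * Rabs l <= 3 / 2 * y).
  { pose proof (Rabs_pos l). rewrite <- (pow2_abs l) in Hl. nra. }
  assert (L3 : Rabs (4 * l * x) <= 3 / 2 * (x ^ 2 + y ^ 2)).
  { rewrite !Rabs_mult, (Rabs_right 4) by lra. rewrite <- (pow2_abs x).
    pose proof (Rabs_pos x). pose proof (Rabs_pos l). pose proof (pow2_ge_0 (Rabs x - y)). nra. }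
  apply Rabs_le_between in L3. apply Rabs_le_between in HB.
  assert (- (3 / 2) <= 4 * l * x / (x ^ 2 + y ^ 2)).
  { apply (Rmult_le_reg_r (x ^ 2 + y ^ 2)); auto. unfold Rdiv.
    rewrite Rmult_assoc, Rinv_l by lra. lra. }
  lra.
Qed.

(** * The a priori bound *)

Definition segpt z0 z1 t := Cadd z0 (Cmul (RtoC t) (Csub z1 z0)).

Lemma Re_Im_lipschitz_on_segment (h dh : Cpx -> Cpx) z0 z1 K :
  (forall t, 0 <= t <= 1 ->
     C_has_deriv h (segpt z0 z1 t) (dh (segpt z0 z1 t)) /\ Cmod (dh (segpt z0 z1 t)) <= K) ->
  Rabs (Re (h z1) - Re (h z0)) <= K * Cmod (Csub z1 z0) /\
  Rabs (Im (h z1) - Im (h z0)) <= K * Cmod (Csub z1 z0).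
Proof.
  intros H. set (v := Csub z1 z0).
  assert (Hd : forall t, 0 <= t <= 1 ->
    derivable_pt_lim (fun t => Re (h (segpt z0 z1 t))) t (Re (Cmul (dh (segpt z0 z1 t)) v)) /\
    derivable_pt_lim (fun t => Im (h (segpt z0 z1 t))) t (Im (Cmul (dh (segpt z0 z1 t)) v))).
  { intros t Ht. apply (has_deriv_within_Re_Im _ (t - 1) (t + 1)); [lra|].
    apply has_deriv_within_line, H, Ht. }
  assert (Hb : forall t, 0 <= t <= 1 -> Cmod (Cmul (dh (segpt z0 z1 t)) v) <= K * Cmod v).
  { intros t Ht. rewrite Cmod_Cmul. apply Rmult_le_compat_r; [apply Cmod_ge0 | apply H, Ht]. }
  assert (E0 : segpt z0 z1 0 = z0)
    by (destruct z0; unfold segpt, Cadd, Cmul, Csub, Copp, RtoC, Re, Im; simpl; f_equal; ring).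
  assert (E1 : segpt z0 z1 1 = z1)
    by (destruct z1; unfold segpt, Cadd, Cmul, Csub, Copp, RtoC, Re, Im; simpl; f_equal; ring).
  pose proof (Rabs_sub_le_of_deriv_bound (fun t => Re (h (segpt z0 z1 t)))
    (fun t => Re (Cmul (dh (segpt z0 z1 t)) v)) 0 1 (K * Cmod v)) as HRe.
  pose proof (Rabs_sub_le_of_deriv_bound (fun t => Im (h (segpt z0 z1 t)))
    (fun t => Im (Cmul (dh (segpt z0 z1 t)) v)) 0 1 (K * Cmod v)) as HIm.
  cbv beta in HRe, HIm. rewrite E0, E1, Rminus_0_r, Rmult_1_r in HRe, HIm.
  split; [apply HRe | apply HIm]; try lra; intros t Ht.
  - apply Hd, Ht.
  - eapply Rle_trans; [apply Rabs_Re_le_Cmod | apply Hb, Ht].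
  - apply Hd, Ht.
  - eapply Rle_trans; [apply Rabs_Im_le_Cmod | apply Hb, Ht].
Qed.

Section Strip.

Variables (T delta d1 K : R) (lam dlam ddlam : Cpx -> Cpx) (U : Cpx -> Prop).
Hypothesis hT : 0 < T.
Hypothesis hd1 : 0 < d1.
Hypothesis hd1d : 2 * d1 <= delta.
Hypothesis HU : forall z, Eset T delta z -> U z.
Hypothesis Hl : forall z, U z -> C_has_deriv lam z (dlam z).
Hypothesis Hdl : forall z, U z -> C_has_deriv dlam z (ddlam z).
Hypothesis Hre : forall t, 0 <= t <= T -> Im (lam (RtoC t)) = 0.
Hypothesis Hhol : forall s t, 0 <= s <= T -> 0 <= t <= T -> s <> t ->
  Cmod (Csub (lam (RtoC t)) (lam (RtoC s))) / sqrt (Rabs (t - s)) <= 1.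
Hypothesis HK : forall z, Eset T delta z -> Cmod (dlam z) <= K /\ Cmod (ddlam z) <= K.

Definition box z := - d1 <= Re z <= T + d1 /\ Rabs (Im z) <= d1.

Lemma box_near z : box z -> Cmod (Csub z (RtoC (clamp 0 T (Re z)))) <= 2 * d1.
Proof.
  intros [H1 H2]. eapply Rle_trans; [apply Cmod_le_Rabs_Re_Im|].
  change (Rabs (Re z - clamp 0 T (Re z)) + Rabs (Im z - 0) <= 2 * d1).
  rewrite Rminus_0_r. pose proof (clamp_near 0 T d1 (Re z)). lra.
Qed.

Lemma box_Eset z : box z -> Eset T delta z.
Proof.
  intros Hb. exists (clamp 0 T (Re z)). split; [apply clamp_range; lra|].
  pose proof (box_near z Hb). lra.
Qed.

Lemma box_RtoC p : 0 <= p <= T -> box (RtoC p).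
Proof. intros. unfold box, RtoC, Re, Im. simpl. rewrite Rabs_R0. lra. Qed.

Lemma K_nonneg : 0 <= K.
Proof.
  assert (H0 : 0 <= 0 <= T) by lra.
  exact (Rle_trans _ _ _ (Cmod_ge0 _) (proj1 (HK _ (box_Eset _ (box_RtoC 0 H0))))).
Qed.

Lemma box_segpt z0 z1 t : box z0 -> box z1 -> 0 <= t <= 1 -> box (segpt z0 z1 t).
Proof.
  destruct z0 as [a0 b0], z1 as [a1 b1].
  cbv [box segpt Cadd Cmul Csub Copp RtoC Re Im fst snd].
  intros [A1 A2] [B1 B2] Ht. apply Rabs_le_between in A2, B2.
  split; [split; nra | apply Rabs_le; split; nra].
Qed.

Lemma Re_lam_lipschitz z0 z1 : box z0 -> box z1 ->
  Rabs (Re (lam z1) - Re (lam z0)) <= K * Cmod (Csub z1 z0).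
Proof.
  intros H0 H1. apply (Re_Im_lipschitz_on_segment lam dlam z0 z1 K). intros t Ht.
  pose proof (box_Eset _ (box_segpt z0 z1 t H0 H1 Ht)).
  split; [apply Hl, HU | apply HK]; auto.
Qed.

Lemma Im_dlam_lipschitz z0 z1 : box z0 -> box z1 ->
  Rabs (Im (dlam z1) - Im (dlam z0)) <= K * Cmod (Csub z1 z0).
Proof.
  intros H0 H1. apply (Re_Im_lipschitz_on_segment dlam ddlam z0 z1 K). intros t Ht.
  pose proof (box_Eset _ (box_segpt z0 z1 t H0 H1 Ht)).
  split; [apply Hdl, HU | apply HK]; auto.
Qed.

(* [lam] is real on [[0, T]], hence so are its real difference quotients and
   their limit [dlam p]. *)
Lemma Im_dlam_real p : 0 <= p <= T -> Im (dlam (RtoC p)) = 0.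
Proof.
  intros Hp. set (d := dlam (RtoC p)).
  destruct (Req_dec (Im d) 0) as [|Hne]; auto. exfalso.
  assert (He : 0 < Rabs (Im d) / 2) by (apply Rabs_pos_lt in Hne; lra).
  destruct (Hl (RtoC p) (HU _ (box_Eset _ (box_RtoC p Hp))) _ He) as [r [Hr Hr']].
  set (m := Rmin (r / 2) (T / 2)).
  assert (0 < m) by (apply Rmin_pos; lra).
  assert (m <= r / 2) by apply Rmin_l. assert (m <= T / 2) by apply Rmin_r.
  set (h := if Rle_dec p (T / 2) then m else - m).
  assert (Hh : 0 <= p + h <= T /\ Rabs h = m).
  { unfold h. destruct Rle_dec.
    - split; [lra | apply Rabs_right; lra].
    - split; [lra | rewrite Rabs_Ropp; apply Rabs_right; lra]. }
  destruct Hh as [Hph Hah].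
  specialize (Hr' (RtoC h)). rewrite Cmod_RtoC, Hah in Hr'. specialize (Hr' ltac:(lra)).
  replace (Cadd (RtoC p) (RtoC h)) with (RtoC (p + h)) in Hr'
    by (unfold Cadd, RtoC, Re, Im; simpl; f_equal; ring).
  pose proof (Rabs_Im_le_Cmod (Csub (Csub (lam (RtoC (p + h))) (lam (RtoC p))) (Cmul d (RtoC h)))) as HI.
  replace (Im (Csub (Csub (lam (RtoC (p + h))) (lam (RtoC p))) (Cmul d (RtoC h)))) with (- (Im d * h)) in HI
    by (change (- (Im d * h) = Im (lam (RtoC (p + h))) - Im (lam (RtoC p)) - (Re d * 0 + Im d * h));
        rewrite (Hre (p + h)), (Hre p) by lra; ring).
  rewrite Rabs_Ropp, Rabs_mult, Hah in HI. fold d in Hr'. apply Rabs_pos_lt in Hne. nra.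
Qed.

Lemma Rabs_Re_lam_le_sqrt p q : 0 <= p <= T -> 0 <= q <= T ->
  Rabs (Re (lam (RtoC q)) - Re (lam (RtoC p))) <= sqrt (Rabs (q - p)).
Proof.
  intros Hp Hq. destruct (Req_dec p q) as [<-|Hne].
  - unfold Rminus. rewrite !Rplus_opp_r, Rabs_R0. apply sqrt_pos.
  - specialize (Hhol p q Hp Hq Hne).
    assert (0 < sqrt (Rabs (q - p))) by (apply sqrt_lt_R0, Rabs_pos_lt; lra).
    assert (Rabs (Re (lam (RtoC q)) - Re (lam (RtoC p))) <= Cmod (Csub (lam (RtoC q)) (lam (RtoC p))))
      by exact (Rabs_Re_le_Cmod (Csub (lam (RtoC q)) (lam (RtoC p)))).
    unfold Rdiv in Hhol. apply (Rmult_le_compat_r (sqrt (Rabs (q - p)))) in Hhol; [|lra].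
    rewrite Rmult_assoc, Rinv_l in Hhol by lra. lra.
Qed.

Variable s : Cpx.
Hypothesis hs1 : 0 < Re s < T + d1.
Hypothesis hs2 : Rabs (Im s) < d1.

Definition horizon := Re s + d1.
Definition shift t := Csub s (RtoC t).
Definition ell t := Re (lam (shift t)) - Re (lam s).

Lemma shift_pair t : shift t = (Re s - t, Im s).
Proof. unfold shift, Csub, Cadd, Copp, RtoC, Re, Im. simpl. f_equal; ring. Qed.

Lemma box_shift t : 0 <= t <= horizon -> box (shift t).
Proof. intros Ht. unfold box. rewrite shift_pair. unfold horizon in Ht. simpl. lra. Qed.

Lemma Cmod_shift_sub a c : Cmod (Csub (shift a) (shift c)) = Rabs (a - c).
Proof.
  replace (Csub (shift a) (shift c)) with (RtoC (c - a))
    by (rewrite !shift_pair; unfold Csub, Cadd, Copp, RtoC, Re, Im; simpl; f_equal; ring).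
  rewrite Cmod_RtoC. apply Rabs_minus_sym.
Qed.

Lemma Rabs_Im_dlam_shift t : 0 <= t <= horizon -> Rabs (Im (dlam (shift t))) <= 2 * K * d1.
Proof.
  intros Ht. set (p := clamp 0 T (Re (shift t))).
  assert (Hp : 0 <= p <= T) by (apply clamp_range; lra).
  pose proof (Im_dlam_lipschitz (RtoC p) (shift t) (box_RtoC p Hp) (box_shift t Ht)) as H.
  rewrite (Im_dlam_real p Hp), Rminus_0_r in H.
  pose proof (box_near _ (box_shift t Ht)). pose proof K_nonneg.
  fold p in H0. nra.
Qed.

Lemma Rabs_ell_le_linear t : 0 <= t <= horizon -> Rabs (ell t) <= K * t.
Proof.
  intros Ht. eapply Rle_trans; [apply (Re_lam_lipschitz s (shift t)); [split; lra | apply box_shift, Ht]|].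
  replace (Csub (shift t) s) with (Csub (shift t) (shift 0))
    by (rewrite (shift_pair 0); destruct s; unfold Re, Im; simpl; f_equal; f_equal; ring).
  rewrite Cmod_shift_sub, Rminus_0_r, Rabs_right by lra. lra.
Qed.

(* Both endpoints are within [2 d1] of the real axis, where the Hölder bound applies. *)
Lemma Rabs_ell_le_sqrt t : 0 <= t <= horizon -> Rabs (ell t) <= sqrt t + 4 * K * d1.
Proof.
  intros Ht. unfold ell.
  assert (Hs : box s) by (split; lra).
  set (pt := clamp 0 T (Re (shift t))). set (p0 := clamp 0 T (Re s)).
  assert (Hpt : 0 <= pt <= T) by (apply clamp_range; lra).
  assert (Hp0 : 0 <= p0 <= T) by (apply clamp_range; lra).
  pose proof (Re_lam_lipschitz (RtoC pt) (shift t) (box_RtoC pt Hpt) (box_shift t Ht)) as H1.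
  pose proof (Re_lam_lipschitz (RtoC p0) s (box_RtoC p0 Hp0) Hs) as H2.
  pose proof (Rabs_Re_lam_le_sqrt p0 pt Hp0 Hpt) as H3.
  pose proof (box_near _ (box_shift t Ht)) as N1. pose proof (box_near _ Hs) as N2.
  fold pt in N1. fold p0 in N2.
  assert (Hsq : sqrt (Rabs (pt - p0)) <= sqrt t).
  { apply sqrt_le_1_alt. unfold pt, p0. eapply Rle_trans; [apply clamp_lipschitz; lra|].
    rewrite shift_pair. simpl. replace (Re s - t - Re s) with (- t) by ring.
    rewrite Rabs_Ropp, Rabs_right; lra. }
  pose proof K_nonneg.
  assert (K * Cmod (Csub (shift t) (RtoC pt)) <= K * (2 * d1)) by (apply Rmult_le_compat_l; lra).
  assert (K * Cmod (Csub s (RtoC p0)) <= K * (2 * d1)) by (apply Rmult_le_compat_l; lra).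
  rewrite Rabs_minus_sym in H2.
  pose proof (Rabs_triang (Re (lam (shift t)) - Re (lam (RtoC pt))) (Re (lam (RtoC pt)) - Re (lam (RtoC p0)))).
  pose proof (Rabs_triang (Re (lam (shift t)) - Re (lam (RtoC p0))) (Re (lam (RtoC p0)) - Re (lam s))).
  replace (Re (lam (shift t)) - Re (lam (RtoC pt)) + (Re (lam (RtoC pt)) - Re (lam (RtoC p0))))
    with (Re (lam (shift t)) - Re (lam (RtoC p0))) in * by ring.
  replace (Re (lam (shift t)) - Re (lam (RtoC p0)) + (Re (lam (RtoC p0)) - Re (lam s)))
    with (Re (lam (shift t)) - Re (lam s)) in * by ring.
  lra.
Qed.

Hypothesis hdK : 1600 * K ^ 2 * d1 <= 1.

(* The linear bound wins for [sqrt t <= 80 K d1], the Hölder bound otherwise. *)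
Lemma ell_sqr_le t : 0 <= t <= horizon -> ell t ^ 2 <= 441 / 400 * t.
Proof.
  intros Ht. pose proof (Rabs_ell_le_linear t Ht) as L1. pose proof (Rabs_ell_le_sqrt t Ht) as L2.
  pose proof (sqrt_pos t) as S0. pose proof (sqrt_sqrt t ltac:(lra)) as S1.
  pose proof K_nonneg.
  rewrite <- (pow2_abs (ell t)). pose proof (Rabs_pos (ell t)).
  destruct (Rle_dec (80 * K * d1) (sqrt t)).
  - assert (Rabs (ell t) <= 21 / 20 * sqrt t) by lra. nra.
  - assert (K * t <= 1 / 20 * sqrt t).
    { replace (K * t) with (K * sqrt t * sqrt t) by (rewrite Rmult_assoc, S1; ring).
      assert (K * sqrt t <= K * (80 * K * d1)) by (apply Rmult_le_compat_l; lra).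
      nra. }
    nra.
Qed.

Lemma ell_deriv t : 0 <= t <= horizon -> derivable_pt_lim ell t (- Re (dlam (shift t))).
Proof.
  intros Ht. unfold ell.
  replace (- Re (dlam (shift t))) with (Re (Cmul (dlam (shift t)) (-1, 0)) - 0)
    by (unfold Cmul, Re, Im; simpl; ring).
  apply derivable_pt_lim_minus; [|apply derivable_pt_lim_const].
  assert (E : forall u, shift u = Cadd s (Cmul (RtoC u) (-1, 0))).
  { intros u. rewrite shift_pair. unfold Cadd, Cmul, RtoC, Re, Im; simpl. f_equal; ring. }
  replace (fun u => Re (lam (shift u))) with (fun u => Re (lam (Cadd s (Cmul (RtoC u) (-1, 0)))))
    by (apply functional_extensionality; intros; rewrite E; auto).
  apply (has_deriv_within_Re_Im _ (t - 1) (t + 1)); [lra|].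
  apply has_deriv_within_line. rewrite <- E. apply Hl, HU, box_Eset, box_shift, Ht.
Qed.


Hypothesis hd12 : d1 <= 1 / 2.
(* Since [Im f <= 2 T + 5], this makes [|Im f * Im lam' (s - u)| <= 1/20]. *)
Hypothesis hdY : 40 * K * (2 * T + 5) * d1 <= 1.

Variable eps : R.
Hypothesis heps : 0 < eps <= 1.

Section ClippedSolution.

Variable f : R -> Cpx.
Hypothesis Hf0 : f 0 = (0, eps).
Hypothesis Hfc : forall t, Ccontinuous_at f t.
Hypothesis Hfd : forall u, 0 <= u <= horizon ->
  has_deriv_within f 0 horizon u (Cadd (Cdiv (RtoC (-2)) (clip_Im eps (f u))) (dlam (shift u))).

Definition parabola_bound t := 0 < Im (f t) /\ 2 * t + eps ^ 2 / 4 <= Im (f t) ^ 2.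

Lemma half_eps_le_Im t : 0 <= t -> parabola_bound t -> eps / 2 <= Im (f t).
Proof. intros H0 [H1 H2]. destruct (Rle_dec (eps / 2) (Im (f t))); auto. nra. Qed.

Lemma Im_f_continuous t : continuity_pt (fun u => Im (f u)) t.
Proof. apply Ccontinuous_at_Im, Hfc. Qed.

Lemma Re_f_continuous t : continuity_pt (fun u => Re (f u)) t.
Proof. apply Ccontinuous_at_Re, Hfc. Qed.

Lemma f_deriv_Re_Im t : 0 < t < horizon -> eps / 2 <= Im (f t) ->
  derivable_pt_lim (fun u => Re (f u)) t
    (-2 * Re (f t) / (Re (f t) ^ 2 + Im (f t) ^ 2) + Re (dlam (shift t))) /\
  derivable_pt_lim (fun u => Im (f u)) t
    (2 * Im (f t) / (Re (f t) ^ 2 + Im (f t) ^ 2) + Im (dlam (shift t))).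
Proof.
  intros Ht Hy. pose proof (Hfd t ltac:(lra)) as Hd.
  rewrite clip_Im_id, Cdiv_neg2_pair in Hd by exact Hy.
  exact (has_deriv_within_Re_Im f 0 horizon t _ Ht Hd).
Qed.

Lemma Im_f_le_growth m : 0 <= m <= horizon -> (forall t, 0 < t < m -> parabola_bound t) ->
  Im (f m) <= eps + 2 * sqrt 2 * sqrt m + 2 * K * d1 * m.
Proof.
  intros Hm Hg.
  assert (S2 : 0 < sqrt 2) by (apply sqrt_lt_R0; lra).
  assert (S22 : sqrt 2 * sqrt 2 = 2) by (apply sqrt_sqrt; lra).
  enough (Im (f m) - 2 * sqrt 2 * sqrt m - 2 * K * d1 * m
          <= Im (f 0) - 2 * sqrt 2 * sqrt 0 - 2 * K * d1 * 0)
    by (rewrite Hf0, sqrt_0 in H; simpl in H; lra).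
  apply (nonincreasing_of_deriv_nonpos (fun t => Im (f t) - 2 * sqrt 2 * sqrt t - 2 * K * d1 * t)
    (fun t => (2 * Im (f t) / (Re (f t) ^ 2 + Im (f t) ^ 2) + Im (dlam (shift t)))
              - 2 * sqrt 2 * / (2 * sqrt t) - 2 * K * d1)); [lra | | |].
  - intros t Ht. apply derivable_pt_lim_minus; [apply derivable_pt_lim_minus|].
    + exact (proj2 (f_deriv_Re_Im t ltac:(lra) (half_eps_le_Im t ltac:(lra) (Hg t Ht)))).
    + apply derivable_pt_lim_scal_l, derivable_pt_lim_sqrt. lra.
    + apply derivable_pt_lim_linear.
  - intros t Ht. destruct (Hg t Ht) as [Y1 Y2].
    pose proof (Rabs_Im_dlam_shift t ltac:(lra)) as HB. apply Rabs_le_between in HB.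
    set (x := Re (f t)) in *. set (y := Im (f t)) in *.
    assert (St : 0 < sqrt t) by (apply sqrt_lt_R0; lra).
    assert (Stt : sqrt t * sqrt t = t) by (apply sqrt_sqrt; lra).
    assert (Hq : sqrt 2 * sqrt t <= y).
    { apply Rsqr_incr_0_var; [|lra]. unfold Rsqr.
      replace (sqrt 2 * sqrt t * (sqrt 2 * sqrt t)) with ((sqrt 2 * sqrt 2) * (sqrt t * sqrt t)) by ring.
      rewrite S22, Stt. nra. }
    assert (A1 : 2 * y / (x ^ 2 + y ^ 2) <= 2 / y).
    { apply Rmult_le_reg_r with (y * (x ^ 2 + y ^ 2)); [nra|].
      unfold Rdiv. field_simplify; nra. }
    assert (A2 : 2 / y <= 2 * sqrt 2 * / (2 * sqrt t)).
    { replace (2 * sqrt 2 * / (2 * sqrt t)) with ((sqrt 2 * sqrt 2) / (sqrt 2 * sqrt t)) by (field; lra).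
      rewrite S22. apply Rmult_le_compat_l; [lra|]. apply Rinv_le_contravar; nra. }
    lra.
  - intros t Ht. apply continuity_pt_minus; [apply continuity_pt_minus|].
    + apply Im_f_continuous.
    + apply continuity_pt_scal, continuity_pt_sqrt. lra.
    + exact (derivable_pt_lim_continuity_pt _ _ _ (derivable_pt_lim_linear _ t)).
Qed.

Lemma Im_f_bounded m : 0 <= m <= horizon -> (forall t, 0 < t < m -> parabola_bound t) -> Im (f m) <= 2 * T + 5.
Proof.
  intros Hm Hg. pose proof (Im_f_le_growth m Hm Hg).
  assert (S22 : sqrt 2 * sqrt 2 = 2) by (apply sqrt_sqrt; lra).
  assert (Smm : sqrt m * sqrt m = m) by (apply sqrt_sqrt; lra).
  assert (2 * sqrt 2 * sqrt m <= 2 + m) by (pose proof (pow2_ge_0 (sqrt 2 - sqrt m)); nra).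
  pose proof K_nonneg.
  assert (2 * K * d1 <= 1) by nra.
  unfold horizon in Hm. nra.
Qed.

(* The real part of [lam'] cancels between [Re f] and [ell]. *)
Lemma lyapunov_deriv t : 0 < t < horizon -> eps / 2 <= Im (f t) ->
  derivable_pt_lim (fun u => Im (f u) * Im (f u) - (Re (f u) + ell u) * (Re (f u) + ell u) - 12 / 5 * u) t
    (4 + 4 * ell t * Re (f t) / (Re (f t) ^ 2 + Im (f t) ^ 2) + 2 * Im (f t) * Im (dlam (shift t)) - 12 / 5).
Proof.
  intros Ht Hy. destruct (f_deriv_Re_Im t Ht Hy) as [Dx Dy].
  assert (Dxl := derivable_pt_lim_plus _ _ t _ _ Dx (ell_deriv t ltac:(lra))).
  pose proof (derivable_pt_lim_minus _ _ t _ _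
    (derivable_pt_lim_minus _ _ t _ _ (derivable_pt_lim_mult _ _ t _ _ Dy Dy)
                                      (derivable_pt_lim_mult _ _ t _ _ Dxl Dxl))
    (derivable_pt_lim_linear (12 / 5) t)) as D.
  unfold minus_fct, mult_fct, plus_fct in D.
  match goal with D : derivable_pt_lim _ t ?l |- derivable_pt_lim _ t ?l' => replace l' with l end; [exact D|].
  assert (0 < Re (f t) ^ 2 + Im (f t) ^ 2) by nra. field. lra.
Qed.

Lemma Im_pos_of_parabola_before m : 0 <= m <= horizon -> (forall t, 0 <= t < m -> parabola_bound t) ->
  0 < Im (f m).
Proof.
  intros Hm Hg. destruct (Req_dec m 0) as [->|Hm0]; [rewrite Hf0; simpl; lra|].
  destruct (proj1 (continuity_pt_ball _ m) (Im_f_continuous m) (eps / 4)) as [d [Hd Hd']]; [lra|].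
  set (tau := m - Rmin (d / 2) (m / 2)).
  assert (0 < Rmin (d / 2) (m / 2)) by (apply Rmin_pos; lra).
  pose proof (Rmin_l (d / 2) (m / 2)). pose proof (Rmin_r (d / 2) (m / 2)).
  assert (Ht1 : 0 <= tau < m) by (unfold tau; lra).
  assert (Ht2 : Rabs (tau - m) < d) by (unfold tau; rewrite Rabs_left; lra).
  specialize (Hd' tau Ht2). pose proof (half_eps_le_Im tau ltac:(lra) (Hg tau Ht1)).
  apply Rabs_lt_between in Hd'. lra.
Qed.

Lemma parabola_bound_strict m : 0 <= m <= horizon -> (forall t, 0 <= t < m -> parabola_bound t) ->
  0 < Im (f m) /\ eps ^ 2 + 12 / 5 * m <= Im (f m) ^ 2.
Proof.
  intros Hm Hg. split; [exact (Im_pos_of_parabola_before m Hm Hg)|].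
  assert (Hell0 : ell 0 = 0).
  { unfold ell. replace (shift 0) with s; [ring|].
    rewrite shift_pair. destruct s. simpl. f_equal. ring. }
  enough (Im (f 0) * Im (f 0) - (Re (f 0) + ell 0) * (Re (f 0) + ell 0) - 12 / 5 * 0
          <= Im (f m) * Im (f m) - (Re (f m) + ell m) * (Re (f m) + ell m) - 12 / 5 * m)
    by (rewrite Hf0, Hell0 in H; simpl in H; pose proof (pow2_ge_0 (Re (f m) + ell m)); nra).
  apply (nondecreasing_of_deriv_nonneg
    (fun u => Im (f u) * Im (f u) - (Re (f u) + ell u) * (Re (f u) + ell u) - 12 / 5 * u)
    (fun t => 4 + 4 * ell t * Re (f t) / (Re (f t) ^ 2 + Im (f t) ^ 2)
              + 2 * Im (f t) * Im (dlam (shift t)) - 12 / 5) 0 m ltac:(lra)).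
  - intros t Ht. apply lyapunov_deriv; [lra|]. apply half_eps_le_Im; [lra | apply Hg; lra].
  - intros t Ht. destruct (Hg t ltac:(lra)) as [Y1 Y2].
    enough (12 / 5 <= 4 + 4 * ell t * Re (f t) / (Re (f t) ^ 2 + Im (f t) ^ 2)
                      + 2 * Im (f t) * Im (dlam (shift t))) by lra.
    apply (lyapunov_rate_lower _ _ _ _ t); [lra | lra | nra | apply ell_sqr_le; lra |].
    pose proof (Im_f_bounded t ltac:(lra) (fun u Hu => Hg u ltac:(lra))) as HY.
    pose proof (Rabs_Im_dlam_shift t ltac:(lra)). pose proof K_nonneg.
    rewrite Rabs_mult, (Rabs_right (Im (f t))) by lra.
    apply Rle_trans with ((2 * T + 5) * (2 * K * d1)); [apply Rmult_le_compat; try lra; apply Rabs_pos|].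
    nra.
  - intros t Ht. repeat apply continuity_pt_minus.
    + apply continuity_pt_mult; apply Im_f_continuous.
    + apply continuity_pt_mult; apply continuity_pt_plus; try apply Re_f_continuous;
        exact (derivable_pt_lim_continuity_pt _ _ _ (ell_deriv t ltac:(lra))).
    + exact (derivable_pt_lim_continuity_pt _ _ _ (derivable_pt_lim_linear _ t)).
Qed.

Lemma parabola_bound_everywhere u : 0 <= u <= horizon -> parabola_bound u.
Proof.
  apply continuous_induction; [unfold horizon; lra | |].
  - intros m Hm Hg. destruct (parabola_bound_strict m Hm Hg). split; [auto | nra].
  - intros m Hm Hg.
    destruct (parabola_bound_strict m ltac:(lra) (fun t Ht => Hg t ltac:(lra))) as [C1 C2].
    assert (Cg : continuity_pt (fun t => Im (f t) * Im (f t) - 2 * t) m).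
    { apply continuity_pt_minus; [apply continuity_pt_mult; apply Im_f_continuous|].
      exact (derivable_pt_lim_continuity_pt _ _ _ (derivable_pt_lim_linear _ m)). }
    destruct (proj1 (continuity_pt_ball _ m) Cg (eps ^ 2 / 2)) as [d [Hd Hd']]; [nra|].
    destruct (proj1 (continuity_pt_ball _ m) (Im_f_continuous m) (Im (f m) / 2)) as [d' [Hd2 Hd2']]; [lra|].
    assert (0 < Rmin d d') by (apply Rmin_pos; lra).
    pose proof (Rmin_l d d'). pose proof (Rmin_r d d').
    exists (m + Rmin d d' / 2). split; [lra|]. intros t Ht.
    specialize (Hd' t ltac:(rewrite Rabs_right; lra)). specialize (Hd2' t ltac:(rewrite Rabs_right; lra)).
    apply Rabs_lt_between in Hd'. apply Rabs_lt_between in Hd2'.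
    split; [lra | nra].
Qed.

Lemma Im_ge_of_parabola_bound t : 0 <= t -> parabola_bound t -> Rmax (sqrt (2 * t)) (eps / 2) <= Im (f t).
Proof.
  intros Ht [H1 H2]. apply Rmax_lub; [|apply half_eps_le_Im; [lra | split; auto]].
  rewrite <- (sqrt_pow2 (Im (f t))) by lra. apply sqrt_le_1_alt. nra.
Qed.

End ClippedSolution.

Lemma ivp_solution_exists : exists F : R -> Cpx,
  is_ivp_solution dlam s eps horizon F /\
  forall u, 0 <= u <= horizon -> Rmax (sqrt (2 * u)) (eps / 2) <= Im (F u).
Proof.
  assert (hb : 0 < horizon) by (unfold horizon; lra).
  set (D := fun t => dlam (shift (clamp 0 horizon t))).
  assert (HDbox : forall t, box (shift (clamp 0 horizon t))) by (intros t; apply box_shift, clamp_range; lra).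
  assert (HDc : forall t, Ccontinuous_at D t).
  { intros t e He.
    destruct (C_has_deriv_continuous _ _ _ (Hdl _ (HU _ (box_Eset _ (HDbox t)))) e He) as [r [Hr Hr']].
    exists r. split; auto. intros t' Ht'. apply Hr'. rewrite Cmod_shift_sub.
    eapply Rle_lt_trans; [apply clamp_lipschitz; lra | exact Ht']. }
  assert (HDb : forall t, Cmod (D t) <= K) by (intros t; apply HK, box_Eset, HDbox).
  destruct (picard_lindelof horizon (Cmul (RtoC eps) Ci) (fun w => Cdiv (RtoC (-2)) (clip_Im eps w)) (8 / eps ^ 2) K D
              hb ltac:(apply Rdiv_lt_0_compat; nra) (fun z w => clipped_field_lipschitz eps z w ltac:(lra)) HDc HDb)
    as [F [HF0 [HFc HFd]]].
  assert (Hf0 : F 0 = (0, eps)) by (rewrite HF0; unfold Cmul, RtoC, Ci, Re, Im; simpl; f_equal; ring).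
  assert (Hfd : forall u, 0 <= u <= horizon ->
    has_deriv_within F 0 horizon u (Cadd (Cdiv (RtoC (-2)) (clip_Im eps (F u))) (dlam (shift u)))).
  { intros u Hu. specialize (HFd u Hu). unfold D in HFd. rewrite clamp_id in HFd by exact Hu. exact HFd. }
  pose proof (fun u Hu => Im_ge_of_parabola_bound F u (proj1 Hu)
                (parabola_bound_everywhere F Hf0 HFc Hfd u Hu)) as Hbound.
  assert (Hge : forall u, 0 <= u <= horizon -> eps / 2 <= Im (F u))
    by (intros u Hu; eapply Rle_trans; [apply Rmax_r | apply Hbound, Hu]).
  exists F. split; [split; [exact HF0|] | exact Hbound].
  intros u Hu. split.
  - intros E. pose proof (Hge u Hu) as H. rewrite E in H. simpl in H. lra.
  - rewrite <- (clip_Im_id eps (F u)) by (apply Hge, Hu). apply Hfd, Hu.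
Qed.

End Strip.

(** * Uniqueness *)

Lemma derivable_pt_lim_local (F G : R -> R) x l r : 0 < r ->
  (forall y, Rabs (y - x) < r -> G y = F y) ->
  derivable_pt_lim F x l -> derivable_pt_lim G x l.
Proof.
  intros Hr HGF H eps He. destruct (H eps He) as [d Hd].
  assert (Hm : 0 < Rmin d r) by (apply Rmin_pos; [apply cond_pos | lra]).
  exists (mkposreal _ Hm). intros h Hh0 Hh. simpl in Hh.
  rewrite (HGF (x + h)), (HGF x).
  - apply Hd; auto. eapply Rlt_le_trans; [exact Hh | apply Rmin_l].
  - unfold Rminus. rewrite Rplus_opp_r, Rabs_R0. lra.
  - replace (x + h - x) with h by ring. eapply Rlt_le_trans; [exact Hh | apply Rmin_r].
Qed.

Section Uniqueness.

Variables (b eps : R) (D : R -> Cpx) (f g : R -> Cpx).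
Hypothesis hb : 0 < b.
Hypothesis heps : 0 < eps.
Hypothesis Hfg0 : g 0 = f 0.
Hypothesis Hf : forall u, 0 <= u <= b -> has_deriv_within f 0 b u (Cadd (Cdiv (RtoC (-2)) (f u)) (D u)).
Hypothesis Hg : forall u, 0 <= u <= b -> has_deriv_within g 0 b u (Cadd (Cdiv (RtoC (-2)) (g u)) (D u)).
Hypothesis Hfy : forall u, 0 <= u <= b -> eps / 2 <= Im (f u).

(* Extending by constants outside [[0, b]] gives functions continuous on all of
   [R], as the mean value theorem requires. *)
Definition clamped (h : R -> Cpx) t := h (clamp 0 b t).

Lemma clamped_continuous h : (forall u, 0 <= u <= b ->
    has_deriv_within h 0 b u (Cadd (Cdiv (RtoC (-2)) (h u)) (D u))) ->
  forall t, Ccontinuous_at (clamped h) t.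
Proof.
  intros Hh t e He. pose proof (clamp_range 0 b t ltac:(lra)) as Hc.
  destruct (has_deriv_within_continuous _ _ _ _ _ (Hh _ Hc) e He) as [r [Hr Hr']].
  exists r. split; auto. intros t' Ht'. apply Hr'; [apply clamp_range; lra|].
  eapply Rle_lt_trans; [apply clamp_lipschitz; lra | exact Ht'].
Qed.

Lemma clamped_deriv (h : R -> Cpx) (p : Cpx -> R) t l : 0 < t < b ->
  derivable_pt_lim (fun u => p (h u)) t l -> derivable_pt_lim (fun u => p (clamped h u)) t l.
Proof.
  intros Ht. apply (derivable_pt_lim_local _ _ _ _ (Rmin t (b - t))); [apply Rmin_pos; lra|].
  intros y Hy. pose proof (Rmin_l t (b - t)). pose proof (Rmin_r t (b - t)).
  unfold clamped. rewrite clamp_id; auto. apply Rabs_lt_between in Hy. lra.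
Qed.

Definition gap t := Csub (clamped g t) (clamped f t).
Definition gap_rate t := Csub (Cdiv (RtoC (-2)) (g t)) (Cdiv (RtoC (-2)) (f t)).
Definition gronwall_const := 32 / eps ^ 2.

Definition weighted_gap t :=
  (Re (gap t) * Re (gap t) + Im (gap t) * Im (gap t)) * exp (- gronwall_const * t).

Definition weighted_gap_rate t :=
  (2 * (Re (gap t) * Re (gap_rate t) + Im (gap t) * Im (gap_rate t))
   - gronwall_const * (Re (gap t) * Re (gap t) + Im (gap t) * Im (gap t))) * exp (- gronwall_const * t).

Lemma weighted_gap_deriv t : 0 < t < b -> derivable_pt_lim weighted_gap t (weighted_gap_rate t).
Proof.
  intros Ht.
  destruct (has_deriv_within_Re_Im f 0 b t _ Ht (Hf t ltac:(lra))) as [F1 F2].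
  destruct (has_deriv_within_Re_Im g 0 b t _ Ht (Hg t ltac:(lra))) as [G1 G2].
  apply (clamped_deriv f Re t _ Ht) in F1. apply (clamped_deriv f Im t _ Ht) in F2.
  apply (clamped_deriv g Re t _ Ht) in G1. apply (clamped_deriv g Im t _ Ht) in G2.
  pose proof (derivable_pt_lim_minus _ _ t _ _ G1 F1) as DRe.
  pose proof (derivable_pt_lim_minus _ _ t _ _ G2 F2) as DIm.
  pose proof (derivable_pt_lim_mult _ _ t _ _
    (derivable_pt_lim_plus _ _ t _ _ (derivable_pt_lim_mult _ _ t _ _ DRe DRe)
                                     (derivable_pt_lim_mult _ _ t _ _ DIm DIm))
    (derivable_pt_lim_exp_linear (- gronwall_const) t)) as D0.
  unfold mult_fct, plus_fct, minus_fct in D0.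
  match goal with D0 : derivable_pt_lim _ t ?l |- derivable_pt_lim _ t ?l' => replace l' with l end; [exact D0|].
  unfold weighted_gap_rate, gap, gap_rate, clamped. rewrite clamp_id by lra. simpl. ring.
Qed.

(* [-2 / z] is [32 / eps^2]-Lipschitz where [|g| >= eps / 4] and [|f| >= eps / 2]. *)
Lemma weighted_gap_rate_nonpos t : 0 < t < b -> eps / 4 <= Cmod (g t) -> weighted_gap_rate t <= 0.
Proof.
  intros Ht Hgt. unfold weighted_gap_rate. pose proof (exp_pos (- gronwall_const * t)).
  assert (Hgap : gap t = Csub (g t) (f t)) by (unfold gap, clamped; rewrite clamp_id by lra; reflexivity).
  assert (Hft : eps / 2 <= Cmod (f t)).
  { pose proof (Hfy t ltac:(lra)). pose proof (Rle_abs (Im (f t))). pose proof (Rabs_Im_le_Cmod (f t)). lra. }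
  pose proof (Cdiv_neg2_lipschitz (g t) (f t) (eps / 4) (eps / 2) ltac:(lra) ltac:(lra) Hgt Hft) as HL.
  fold (gap_rate t) in HL. rewrite <- Hgap in HL.
  pose proof (Re_Im_inner_le_Cmod (gap t) (gap_rate t)) as HCS.
  pose proof (Cmod_ge0 (gap t)). pose proof (Cmod_sqr (gap t)).
  replace (2 / (eps / 4 * (eps / 2))) with (gronwall_const / 2) in HL by (unfold gronwall_const; field; lra).
  assert (0 < gronwall_const) by (unfold gronwall_const; apply Rdiv_lt_0_compat; nra).
  apply Rmult_le_0_r; [|lra]. nra.
Qed.

Lemma local_uniqueness m m' : 0 <= m < m' -> m' <= b -> g m = f m ->
  (forall t, m <= t <= m' -> eps / 4 <= Cmod (g t)) ->
  forall t, m <= t <= m' -> g t = f t.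
Proof.
  intros Hm Hm' Heq Hgl t Ht.
  assert (Hcont : forall x, continuity_pt (fun u => Re (gap u)) x /\ continuity_pt (fun u => Im (gap u)) x).
  { intros x. pose proof (clamped_continuous g Hg x) as Cg. pose proof (clamped_continuous f Hf x) as Cf.
    split; apply continuity_pt_minus; auto using Ccontinuous_at_Re, Ccontinuous_at_Im. }
  assert (Hdec : weighted_gap t <= weighted_gap m).
  { destruct (Req_dec t m) as [->|]; [lra|].
    apply (nonincreasing_of_deriv_nonpos weighted_gap weighted_gap_rate m t); [lra | | |].
    - intros x Hx. apply weighted_gap_deriv. lra.
    - intros x Hx. apply weighted_gap_rate_nonpos; [lra | apply Hgl; lra].
    - intros x _. unfold weighted_gap. apply continuity_pt_mult.
      + destruct (Hcont x). apply continuity_pt_plus; apply continuity_pt_mult; auto.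
      + exact (derivable_pt_lim_continuity_pt _ _ _ (derivable_pt_lim_exp_linear _ x)). }
  assert (Hgap : forall u, 0 <= u <= b -> gap u = Csub (g u) (f u))
    by (intros u Hu; unfold gap, clamped; rewrite clamp_id by lra; reflexivity).
  unfold weighted_gap in Hdec. rewrite (Hgap m), (Hgap t), Heq in Hdec by lra.
  replace (Re (Csub (f m) (f m))) with 0 in Hdec by (simpl; ring).
  replace (Im (Csub (f m) (f m))) with 0 in Hdec by (simpl; ring).
  pose proof (exp_pos (- gronwall_const * t)). pose proof (Cmod_sqr (Csub (g t) (f t))).
  pose proof (Cmod_ge0 (Csub (g t) (f t))).
  rewrite !Rmult_0_l, Rplus_0_l, Rmult_0_l in Hdec.
  assert (Re (Csub (g t) (f t)) * Re (Csub (g t) (f t)) + Im (Csub (g t) (f t)) * Im (Csub (g t) (f t)) <= 0)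
    by (apply (Rmult_le_reg_r (exp (- gronwall_const * t))); lra).
  apply Cmod_Csub_eq0. nra.
Qed.

Lemma eq_at_of_eq_before m : 0 < m <= b -> (forall t, 0 <= t < m -> g t = f t) -> g m = f m.
Proof.
  intros Hm Hbefore. apply Cmod_Csub_eq0.
  destruct (Req_dec (Cmod (Csub (g m) (f m))) 0) as [|Hne]; auto. exfalso.
  pose proof (Cmod_ge0 (Csub (g m) (f m))).
  set (e := Cmod (Csub (g m) (f m))) in *.
  destruct (has_deriv_within_continuous g 0 b m _ (Hg m ltac:(lra)) (e / 2)) as [r1 [Hr1 Hr1']]; [lra|].
  destruct (has_deriv_within_continuous f 0 b m _ (Hf m ltac:(lra)) (e / 2)) as [r2 [Hr2 Hr2']]; [lra|].
  set (tau := m - Rmin (Rmin r1 r2 / 2) (m / 2)).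
  assert (0 < Rmin r1 r2) by (apply Rmin_pos; lra).
  pose proof (Rmin_l r1 r2). pose proof (Rmin_r r1 r2).
  assert (0 < Rmin (Rmin r1 r2 / 2) (m / 2)) by (apply Rmin_pos; lra).
  pose proof (Rmin_l (Rmin r1 r2 / 2) (m / 2)). pose proof (Rmin_r (Rmin r1 r2 / 2) (m / 2)).
  assert (Ht1 : 0 <= tau < m) by (unfold tau; lra).
  specialize (Hr1' tau ltac:(lra) ltac:(unfold tau; rewrite Rabs_left; lra)).
  specialize (Hr2' tau ltac:(lra) ltac:(unfold tau; rewrite Rabs_left; lra)).
  rewrite (Hbefore tau Ht1), Cmod_Csub_sym in Hr1'.
  pose proof (Cmod_Csub_triangle (g m) (f tau) (f m)) as Htri. fold e in Htri. lra.
Qed.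

Theorem ivp_uniqueness : forall u, 0 <= u <= b -> g u = f u.
Proof.
  apply continuous_induction; [lra | |].
  - intros m Hm Hbefore. destruct (Req_dec m 0) as [->|]; [exact Hfg0|].
    apply eq_at_of_eq_before; [lra | exact Hbefore].
  - intros m Hm Hupto. assert (Gm : g m = f m) by (apply Hupto; lra).
    destruct (has_deriv_within_continuous g 0 b m _ (Hg m ltac:(lra)) (eps / 4)) as [r [Hr Hr']]; [lra|].
    set (m' := Rmin (m + r / 2) b).
    assert (m < m') by (unfold m'; apply Rmin_glb_lt; lra).
    assert (m' <= b) by apply Rmin_r. assert (m' <= m + r / 2) by apply Rmin_l.
    exists m'. split; auto.
    apply local_uniqueness; auto; [lra|]. intros t Ht.
    specialize (Hr' t ltac:(lra) ltac:(rewrite Rabs_right; lra)).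
    pose proof (Cmod_Csub_ge (g m) (g t)). rewrite Cmod_Csub_sym in Hr'.
    rewrite Gm in *. pose proof (Rle_trans _ _ _ (Hfy m ltac:(lra)) (Rle_trans _ _ _ (Rle_abs _) (Rabs_Im_le_Cmod (f m)))).
    lra.
Qed.

End Uniqueness.

Definition delta1_choice (delta T K : R) : R := Rmin (delta / 4) (1 / (64000 * K ^ 2 * (2 * T + 5))).

Lemma delta1_choice_spec delta T K : 0 < delta -> 0 < T -> 1 <= K ->
  0 < delta1_choice delta T K /\ 2 * delta1_choice delta T K <= delta /\
  1600 * K ^ 2 * delta1_choice delta T K <= 1 /\ delta1_choice delta T K <= 1 / 2 /\
  40 * K * (2 * T + 5) * delta1_choice delta T K <= 1.
Proof.
  intros hd hT hK. unfold delta1_choice.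
  set (c := 64000 * K ^ 2 * (2 * T + 5)).
  assert (hc : 64000 <= c) by (unfold c; nra).
  set (d1 := Rmin (delta / 4) (1 / c)).
  assert (hd1 : 0 < d1) by (apply Rmin_pos; [lra | apply Rdiv_lt_0_compat; lra]).
  assert (d1 <= delta / 4) by apply Rmin_l.
  assert (hd1c : d1 * c <= 1).
  { assert (d1 <= 1 / c) by apply Rmin_r.
    apply (Rmult_le_compat_r c) in H0; [|lra]. unfold Rdiv in H0. rewrite Rmult_assoc, Rinv_l in H0; lra. }
  assert (HK2 : K <= K ^ 2) by nra.
  assert (1600 * K ^ 2 <= c) by (unfold c; assert (0 <= K ^ 2 * (2 * T + 4)) by nra; nra).
  assert (40 * K * (2 * T + 5) <= c) by (unfold c; assert (0 <= (K ^ 2 - K) * (2 * T + 5)) by nra; nra).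
  repeat split; nra.
Qed.

Theorem lemma5p1 :
  forall (delta M T : R), 0 < delta -> 0 < T ->
  exists delta1, 0 < delta1 < delta /\
  forall (lam dlam ddlam : Cpx -> Cpx) (U : Cpx -> Prop),
    C_open U ->
    (forall z, Eset T delta z -> U z) ->
    (forall z, U z -> C_has_deriv lam z (dlam z)) ->
    (forall z, U z -> C_has_deriv dlam z (ddlam z)) ->
    (forall t, 0 <= t <= T -> Im (lam (RtoC t)) = 0) ->
    (forall s t, 0 <= s <= T -> 0 <= t <= T -> s <> t ->
       Cmod (Csub (lam (RtoC t)) (lam (RtoC s))) / sqrt (Rabs (t - s)) <= 1) ->
    (forall z, Eset T delta z -> Cmod (dlam z) <= M /\ Cmod (ddlam z) <= M) ->
    forall (s : Cpx) (eps : R), E1set T delta1 s -> 0 < eps <= 1 ->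
      exists f : R -> Cpx,
        is_ivp_solution dlam s eps (Re s + delta1) f /\
        (forall g : R -> Cpx, is_ivp_solution dlam s eps (Re s + delta1) g ->
           forall u, 0 <= u <= Re s + delta1 -> g u = f u) /\
        (forall u, 0 <= u <= Re s + delta1 ->
           Rmax (sqrt (2 * u)) (eps / 2) <= Im (f u)).
Proof.
  intros delta M T hd hT.
  set (K := Rabs M + 1).
  assert (hK : 1 <= K) by (unfold K; pose proof (Rabs_pos M); lra).
  destruct (delta1_choice_spec delta T K hd hT hK) as (hd1 & hd1d & hdK & hd12 & hdY).
  exists (delta1_choice delta T K). split; [lra|].
  intros lam dlam ddlam U _ HU Hl Hdl Hre Hhol HM s eps [Hs1 Hs2] heps.
  assert (HK : forall z, Eset T delta z -> Cmod (dlam z) <= K /\ Cmod (ddlam z) <= K).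
  { intros z Hz. destruct (HM z Hz). pose proof (Rle_abs M). unfold K. split; lra. }
  destruct (ivp_solution_exists T delta _ K lam dlam ddlam U hT hd1 hd1d HU Hl Hdl Hre Hhol HK
              s Hs1 Hs2 hdK hd12 hdY eps heps) as [F [[HF0 HF] Hbound]].
  exists F. split; [split; assumption | split; [|exact Hbound]].
  intros g [Hg0 Hg]. apply (ivp_uniqueness _ eps (fun u => dlam (Csub s (RtoC u))) F g).
  - unfold horizon in *. lra.
  - lra.
  - congruence.
  - intros u Hu. apply (HF u Hu).
  - intros u Hu. apply (Hg u Hu).
  - intros u Hu. eapply Rle_trans; [apply Rmax_r | apply (Hbound u Hu)].
Qed.
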